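(* Assume (A). Let $v$ be a viscosity solution of class (L) of (E). Then $v$ has a right derivative $v'(0+)>0$ at $0$, $v\in C^2_b([0,\infty))$ (bounded with bounded first and second derivatives), $v$ is concave, $\lim_{x\to\infty}v(x)=f(0)/c$, and $\lim_{x\to\infty}v'(x)=0$.
   Context: Constants $\mu\in\mathbb R$, $\sigma>0$, $c>0$, $a>0$, $\lambda>0$; standing assumption (A): $a>\max\{1,2\mu\}$ and $\mu>\max\{c,\sigma^2/2\}$. $f(z)=\mu z+\lambda\ln\big[\lambda(e^{\frac{a}{\lambda}(1-z)}-1)/(1-z)\big]$ for $z\ne1$, $f(1)=\mu+\lambda\ln a$. (E) is $\frac12\sigma^2v''+f(v')-cv=0$ on $[0,\infty)$, $v(0)=0$. Viscosity sub/supersolution: upper (resp. lower) semicontinuous $u$ with $u(0)=0$ such that for all $x\in(0,\infty)$, $\varphi\in C^2(\mathbb R)$ with $0=(u-\varphi)(x)=\max_{(0,\infty)}(u-\varphi)$ (resp. $\min$): $\frac12\sigma^2\varphi''(x)+f(\varphi'(x))-cu(x)\ge0$ (resp. $\le0$); viscosity solution = continuous and both. Class (L): increasing and bounded on $[0,\infty)$. *)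

From Stdlib Require Import Reals Lra.
From Coquelicot Require Import Coquelicot.
Open Scope R_scope.

Definition fH (mu lam a z : R) : R :=
  if Req_EM_T z 1 then mu + lam * ln a
  else mu * z + lam * ln (lam * (exp (a / lam * (1 - z)) - 1) / (1 - z)).

Definition assumptionA (mu sigma c a lam : R) : Prop :=
  0 < sigma /\ 0 < c /\ 0 < a /\ 0 < lam /\
  a > Rmax 1 (2 * mu) /\ mu > Rmax c (sigma ^ 2 / 2).

Definition usc0 (u : R -> R) : Prop :=
  forall x, 0 <= x -> forall eps, 0 < eps -> exists delta, 0 < delta /\
    forall y, 0 <= y -> Rabs (y - x) < delta -> u y < u x + eps.
Definition lsc0 (u : R -> R) : Prop :=
  forall x, 0 <= x -> forall eps, 0 < eps -> exists delta, 0 < delta /\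
    forall y, 0 <= y -> Rabs (y - x) < delta -> u x - eps < u y.
Definition cont0 (u : R -> R) : Prop :=
  forall x, 0 <= x -> forall eps, 0 < eps -> exists delta, 0 < delta /\
    forall y, 0 <= y -> Rabs (y - x) < delta -> Rabs (u y - u x) < eps.

Definition C2R (phi dphi ddphi : R -> R) : Prop :=
  (forall x, is_derive phi x (dphi x)) /\
  (forall x, is_derive dphi x (ddphi x)) /\
  (forall x, continuous ddphi x).

Definition visc_sub (mu sigma c a lam : R) (u : R -> R) : Prop :=
  usc0 u /\ u 0 = 0 /\
  forall x phi dphi ddphi, 0 < x -> C2R phi dphi ddphi ->
    u x - phi x = 0 -> (forall y, 0 < y -> u y - phi y <= u x - phi x) ->
    1/2 * sigma ^ 2 * ddphi x + fH mu lam a (dphi x) - c * u x >= 0.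

Definition visc_super (mu sigma c a lam : R) (u : R -> R) : Prop :=
  lsc0 u /\ u 0 = 0 /\
  forall x phi dphi ddphi, 0 < x -> C2R phi dphi ddphi ->
    u x - phi x = 0 -> (forall y, 0 < y -> u y - phi y >= u x - phi x) ->
    1/2 * sigma ^ 2 * ddphi x + fH mu lam a (dphi x) - c * u x <= 0.

Definition visc_sol (mu sigma c a lam : R) (u : R -> R) : Prop :=
  cont0 u /\ visc_sub mu sigma c a lam u /\ visc_super mu sigma c a lam u.

Definition classL (u : R -> R) : Prop :=
  (forall x y, 0 <= x -> x <= y -> u x <= u y) /\
  (exists M, forall x, 0 <= x -> Rabs (u x) <= M).

Definition bounded0 (g : R -> R) : Prop :=
  exists M, forall x, 0 <= x -> Rabs (g x) <= M.

Definition concave0 (v : R -> R) : Prop :=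
  forall x y t, 0 <= x -> 0 <= y -> 0 <= t <= 1 ->
    t * v x + (1 - t) * v y <= v (t * x + (1 - t) * y).

Definition right_deriv0 (g : R -> R) (d : R) : Prop :=
  filterlim (fun h => (g h - g 0) / h) (at_right 0) (locally d).

From Stdlib Require Import Reals Lra Classical.
From Coquelicot Require Import Coquelicot.
Open Scope R_scope.

(* The solution is shown to be a classical one, by a purely one-dimensional
   argument on touching parabolas:
   1. Chord lemmas: a continuous function whose touching parabolas have
      curvature in [-k, k] stays within [k/2 (t - al)(be - t)] of its chords,
      and such a chord bound makes it C^1 with a k-Lipschitz derivative.
   2. The Hamiltonian f is differentiable and has linear bounds on [0, oo).
   3. Penalizing a touching parabola by a quartic term turns it into a global
      test function, so the viscosity inequalities apply to touching parabolas.
   4. For the solution v, these give semiconcavity and (on windows away from 0)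
      semiconvexity, hence v is C^{1,1} on (0, oo); repeating the argument on
      v minus a parabola shows v'' = (c v - f(v')) / S classically,
      where S = sigma^2 / 2.
   5. A first-zero argument shows v'' <= 0: v is concave, v' decreases to 0,
      v' is bounded near 0 (Gronwall), and v tends to f(0) / c.
   6. v'(0+) is the supremum of v', it is positive, and the one-sided
      derivatives at 0 follow from the mean value theorem. *)

Lemma le_of_small (X C r : R) : 0 < r -> (forall h, 0 < h < r -> X <= C * h) -> X <= 0.
Proof.
  intros Hr H. destruct (Rle_lt_dec X 0) as [H0|H0]; [exact H0|].
  assert (HC : 0 < Rabs C + 1) by (pose proof (Rabs_pos C); lra).
  set (h := Rmin (r / 2) (X / (2 * (Rabs C + 1)))).
  assert (Hh1 : h <= r / 2) by apply Rmin_l.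
  assert (Hh2 : h <= X / (2 * (Rabs C + 1))) by apply Rmin_r.
  assert (Hh0 : 0 < h) by (apply Rmin_pos; [lra | apply Rdiv_lt_0_compat; lra]).
  specialize (H h ltac:(lra)).
  assert (C * h <= (Rabs C + 1) * h) by (pose proof (Rle_abs C); nra).
  assert ((Rabs C + 1) * h <= X / 2).
  { apply Rle_trans with ((Rabs C + 1) * (X / (2 * (Rabs C + 1)))).
    - apply Rmult_le_compat_l; lra.
    - right; field; lra. }
  lra.
Qed.

Lemma exp_le (x y : R) : x <= y -> exp x <= exp y.
Proof. intros [H|H]; [left; apply exp_increasing; auto | subst; lra]. Qed.

Lemma locally_of_ball (x d : R) (P : R -> Prop) :
  0 < d -> (forall y, Rabs (y - x) < d -> P y) -> locally x P.
Proof. intros Hd H. exists (mkposreal d Hd). intros y Hy. apply H. exact Hy. Qed.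

Lemma continuity_pt_of_eps (f : R -> R) (x : R) :
  (forall eps, 0 < eps -> exists d, 0 < d /\
     forall y, Rabs (y - x) < d -> Rabs (f y - f x) < eps) ->
  continuity_pt f x.
Proof.
  intros H eps He. destruct (H eps He) as [d [Hd H1]].
  exists d. split; [lra|]. intros y [_ Hy]. apply H1. exact Hy.
Qed.

Lemma eps_of_continuity_pt (f : R -> R) (x : R) : continuity_pt f x ->
  forall eps, 0 < eps -> exists d, 0 < d /\
    forall y, Rabs (y - x) < d -> Rabs (f y - f x) < eps.
Proof.
  intros H eps He. destruct (H eps He) as [d [Hd H1]].
  exists d. split; [lra|]. intros y Hy.
  destruct (Req_dec y x) as [->|E]; [rewrite Rminus_diag, Rabs_R0; lra|].
  apply (H1 y). split; [split; [exact I | auto] | exact Hy].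
Qed.

Lemma continuity_pt_of_ex_derive (f : R -> R) (x : R) : ex_derive f x -> continuity_pt f x.
Proof.
  intros H. apply continuity_pt_filterlim.
  exact (ex_derive_continuous (K := R_AbsRing) (V := R_NormedModule) f x H).
Qed.

Lemma mvt_pos (f df : R -> R) (a b : R) : 0 < a -> a < b ->
  (forall x, 0 < x -> is_derive f x (df x)) ->
  exists xi, a <= xi <= b /\ f b - f a = df xi * (b - a).
Proof.
  intros Ha Hab Hd.
  destruct (MVT_gen f a b df) as [xi [Hxi E]].
  - intros x Hx. apply Hd. rewrite Rmin_left in Hx by lra. lra.
  - intros x Hx. apply continuity_pt_of_ex_derive. eexists. apply Hd.
    rewrite Rmin_left in Hx by lra. lra.
  - rewrite Rmin_left, Rmax_right in Hxi by lra. exists xi. auto.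
Qed.

Lemma sup_exists (P : R -> Prop) (f : R -> R) :
  (exists x, P x) -> (exists B, forall x, P x -> f x <= B) ->
  exists L, (forall x, P x -> f x <= L) /\
    forall eps, 0 < eps -> exists x, P x /\ L - eps < f x.
Proof.
  intros [x0 Hx0] [B HB].
  destruct (completeness (fun y => exists x, P x /\ y = f x)) as [L [HL1 HL2]].
  - exists B. intros y [x [Hx ->]]. auto.
  - exists (f x0), x0. auto.
  - exists L. split.
    + intros x Hx. apply HL1. exists x. auto.
    + intros eps He. apply NNPP. intros Hn.
      assert (L <= L - eps); [|lra].
      apply HL2. intros y [x [Hx ->]]. apply Rnot_lt_le. intros Hlt. apply Hn. eauto.
Qed.

Lemma below_left_of_pos_derive (f : R -> R) (x d : R) : is_derive f x d -> 0 < d ->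
  exists del, 0 < del /\ forall t, x - del < t < x -> f t < f x.
Proof.
  intros H Hd. apply is_derive_Reals in H. destruct (H (d / 2) ltac:(lra)) as [del Hdel].
  exists del. split; [apply cond_pos|]. intros t Ht.
  assert (Habs : Rabs (t - x) < del) by (rewrite Rabs_left by lra; lra).
  specialize (Hdel (t - x) ltac:(lra) Habs). replace (x + (t - x)) with t in Hdel by ring.
  apply Rabs_def2 in Hdel.
  assert (Hq : 0 < (f t - f x) / (t - x)) by lra.
  assert (E : f t - f x = (f t - f x) / (t - x) * (t - x)) by (field; lra).
  nra.
Qed.

Lemma derive_local_min (f : R -> R) (x d r : R) : 0 < r -> is_derive f x d ->
  (forall y, Rabs (y - x) < r -> f x <= f y) -> d = 0.
Proof.
  intros Hr Hd Hmin. apply is_derive_Reals in Hd.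
  apply (deriv_minimum f (x - r) (x + r) x (exist _ d Hd)); try lra.
  intros y H1 H2. apply Hmin. apply Rabs_def1; lra.
Qed.

Lemma first_zero (g : R -> R) (x0 t2 : R) : x0 <= t2 ->
  (forall s, x0 <= s <= t2 -> continuity_pt g s) -> 0 < g x0 -> g t2 <= 0 ->
  exists z, x0 < z <= t2 /\ g z = 0 /\ forall s, x0 <= s < z -> 0 < g s.
Proof.
  intros Hle Hc Hx0 Ht2.
  destruct (sup_exists (fun s => x0 <= s <= t2 /\ g s <= 0) (fun s => - s)) as [L [HL1 HL2]].
  { exists t2. split; [lra | exact Ht2]. }
  { exists (- x0). intros s [Hs _]. lra. }
  remember (- L) as z eqn:Ez.
  assert (Zlow : forall s, x0 <= s <= t2 -> g s <= 0 -> z <= s)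
    by (intros s H1 H2; specialize (HL1 s (conj H1 H2)); lra).
  assert (Zapprox : forall e, 0 < e -> exists s, x0 <= s <= t2 /\ g s <= 0 /\ s < z + e)
    by (intros e He; destruct (HL2 e He) as [s [[Hs1 Hs2] Hs3]]; exists s; repeat split; lra).
  assert (Hz : x0 <= z <= t2).
  { split; [|apply Zlow; [lra | exact Ht2]].
    apply Rnot_lt_le. intros Hlt. destruct (Zapprox (x0 - z) ltac:(lra)) as [s [Hs [_ Hs3]]]. lra. }
  assert (Gpos : forall s, x0 <= s < z -> 0 < g s).
  { intros s Hs. apply Rnot_le_lt. intros Hg. specialize (Zlow s ltac:(lra) Hg). lra. }
  assert (Gz_le : g z <= 0).
  { apply Rnot_lt_le. intros Hgz.
    destruct (eps_of_continuity_pt g z (Hc z Hz) (g z) Hgz) as [d [Hd Hd']].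
    destruct (Zapprox d Hd) as [s [Hs1 [Hs2 Hs3]]]. specialize (Zlow s Hs1 Hs2).
    specialize (Hd' s ltac:(rewrite Rabs_right; lra)). apply Rabs_def2 in Hd'. lra. }
  assert (Hxz : x0 < z) by (destruct (Req_dec x0 z) as [<-|]; lra).
  exists z. repeat split; try lra; [|exact Gpos].
  apply Rle_antisym; [exact Gz_le|]. apply Rnot_lt_le. intros Hneg.
  destruct (eps_of_continuity_pt g z (Hc z Hz) (- g z) ltac:(lra)) as [d [Hd Hd']].
  pose proof (Rmax_l x0 (z - d / 2)). pose proof (Rmax_r x0 (z - d / 2)).
  assert (Rmax x0 (z - d / 2) < z) by (apply Rmax_lub_lt; lra).
  specialize (Hd' (Rmax x0 (z - d / 2)) ltac:(rewrite Rabs_left; lra)). apply Rabs_def2 in Hd'.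
  specialize (Gpos (Rmax x0 (z - d / 2)) ltac:(lra)). lra.
Qed.

Lemma derive_nonneg_le (f df : R -> R) (a b : R) : 0 < a -> a <= b ->
  (forall x, 0 < x -> is_derive f x (df x)) -> (forall t, a <= t <= b -> 0 <= df t) -> f a <= f b.
Proof.
  intros Ha Hab Hd Hpos. destruct (Req_dec a b) as [<-|Hne]; [lra|].
  destruct (mvt_pos f df a b Ha ltac:(lra) Hd) as [xi [Hxi E]].
  specialize (Hpos xi Hxi). nra.
Qed.

Lemma no_linear_growth (f df : R -> R) (M x1 d : R) : 0 < x1 -> 0 < d ->
  (forall x, 0 < x -> is_derive f x (df x)) -> (forall t, x1 <= t -> Rabs (f t) <= M) ->
  ~ (forall t, x1 <= t -> d <= df t).
Proof.
  intros Hx1 Hd Hder HM Hgrow.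
  assert (HM0 : 0 <= M) by (pose proof (HM x1 (Rle_refl _)); pose proof (Rabs_pos (f x1)); lra).
  set (T := x1 + (2 * M + 1) / d).
  assert (HMd : 0 < (2 * M + 1) / d) by (apply Rdiv_lt_0_compat; lra).
  destruct (mvt_pos f df x1 T Hx1 ltac:(unfold T; lra) Hder) as [xi [Hxi E]].
  specialize (Hgrow xi ltac:(lra)).
  assert (T - x1 = (2 * M + 1) / d) by (unfold T; ring).
  assert (d * ((2 * M + 1) / d) = 2 * M + 1) by (field; lra).
  pose proof (proj1 (Rabs_le_between _ _) (HM T ltac:(unfold T; lra))).
  pose proof (proj1 (Rabs_le_between _ _) (HM x1 ltac:(lra))). nra.
Qed.

(* If [f] is right-continuous at 0 and [f' -> d0] at 0+, then [d0] is the right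
   derivative of [f] at 0 (mean value theorem on [0, h], for the function frozen
   at [f 0] on the left of 0). *)
Lemma right_deriv_of_derive_limit (f df : R -> R) (d0 : R) :
  (forall x, 0 < x -> is_derive f x (df x)) ->
  (forall eps, 0 < eps -> exists rho, 0 < rho /\ forall t, 0 < t < rho -> Rabs (f t - f 0) < eps) ->
  (forall eps, 0 < eps -> exists rho, 0 < rho /\ forall t, 0 < t < rho -> Rabs (df t - d0) < eps) ->
  right_deriv0 f d0.
Proof.
  intros Hd Hf Hdf. apply filterlim_locally. intros eps.
  destruct (Hdf eps (cond_pos eps)) as [rho [Hr Hrho]].
  exists (mkposreal rho Hr). intros h Hh Hh0.
  change (Rabs (h - 0) < rho) in Hh. change (Rabs ((f h - f 0) / h - d0) < eps).
  rewrite Rminus_0_r, Rabs_right in Hh by lra.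
  set (F := fun x => f (Rmax 0 x)).
  set (dF := fun x => if Rlt_dec 0 x then df x else d0).
  assert (HF : forall x, 0 <= x -> F x = f x) by (intros x Hx; unfold F; rewrite Rmax_right; auto).
  assert (HdF : forall x, 0 < x -> is_derive F x (dF x)).
  { intros x Hx. unfold dF. destruct (Rlt_dec 0 x) as [_|]; [|lra].
    apply (is_derive_ext_loc f); [|apply Hd; exact Hx].
    apply (locally_of_ball x x _ Hx). intros y Hy. apply Rabs_def2 in Hy. symmetry. apply HF. lra. }
  destruct (MVT_gen F 0 h dF) as [xi [Hxi E]].
  - intros x Hx. rewrite Rmin_left in Hx by lra. apply HdF. lra.
  - intros x Hx. rewrite Rmin_left, Rmax_right in Hx by lra.
    destruct (Req_dec x 0) as [->|Hx0]; [|apply continuity_pt_of_ex_derive; eexists; apply HdF; lra].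
    apply continuity_pt_of_eps. intros e He. destruct (Hf e He) as [r [Hr' Hfr]].
    exists r. split; [exact Hr'|]. intros y Hy. rewrite Rminus_0_r in Hy.
    unfold F. rewrite Rmax_left with (y := 0) by lra.
    destruct (Rle_lt_dec y 0) as [Hy0|Hy0].
    + rewrite Rmax_left by lra. rewrite Rminus_diag, Rabs_R0. lra.
    + rewrite Rmax_right by lra. apply Hfr. rewrite Rabs_right in Hy; lra.
  - rewrite Rmin_left, Rmax_right in Hxi by lra.
    rewrite !HF, Rminus_0_r in E by lra.
    replace ((f h - f 0) / h - d0) with (dF xi - d0) by (rewrite E; field; lra).
    unfold dF. destruct (Rlt_dec 0 xi) as [Hxi0|]; [apply Hrho; lra | rewrite Rminus_diag, Rabs_R0; apply cond_pos].
Qed.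

Definition slope (u : R -> R) (x y : R) : R := (u y - u x) / (y - x).

Definition touch_below (u : R -> R) (al be x p q : R) : Prop :=
  forall y, al <= y <= be -> u x + p * (y - x) + q / 2 * (y - x) ^ 2 <= u y.
Definition touch_above (u : R -> R) (al be x p q : R) : Prop :=
  forall y, al <= y <= be -> u y <= u x + p * (y - x) + q / 2 * (y - x) ^ 2.

(* On [a0, b0], [u] deviates from each of its chords by at most the parabolic
   bump [k/2 (t - al) (be - t)]; this is the C^{1,1} condition used below. *)
Definition chord_bound (u : R -> R) (a0 b0 k : R) : Prop :=
  forall al t be, a0 <= al -> al < t -> t < be -> be <= b0 ->
    Rabs (u t - (u al + (u be - u al) * (t - al) / (be - al))) <= k / 2 * (t - al) * (be - t).

(* If the continuous [u] dips below a parabola of curvature [kk] through the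
   ends of its chord over [al, be], then the minimum of the difference is
   interior, and a parabola of curvature [kk] touches [u] from below there. *)
Lemma touch_below_of_dip (u : R -> R) (al be kk t : R) : al < be ->
  (forall y, al <= y <= be -> continuity_pt u y) -> al <= t <= be ->
  u t < u al + (u be - u al) / (be - al) * (t - al) + kk / 2 * (t - al) * (t - be) ->
  exists x p, al < x < be /\ touch_below u al be x p kk.
Proof.
  intros Hab Hc Ht Hdip.
  set (s := (u be - u al) / (be - al)).
  set (Q := fun y => u al + s * (y - al) + kk / 2 * (y - al) * (y - be)).
  set (d := fun y => u y - Q y).
  assert (Hd : forall y, al <= y <= be -> continuity_pt d y).
  { intros y Hy. unfold d, Q. apply continuity_pt_minus; [apply Hc; exact Hy | reg]. }
  destruct (continuity_ab_min d al be (Rlt_le _ _ Hab) Hd) as [xs [Hmin Hxs]].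
  assert (Hdal : d al = 0) by (unfold d, Q; field).
  assert (Hdbe : d be = 0) by (unfold d, Q, s; field; lra).
  assert (Hdt : d t < 0) by (unfold d, Q, s; cbv beta; lra).
  assert (Hm : d xs < 0) by (specialize (Hmin t Ht); lra).
  exists xs, (s + kk / 2 * (2 * xs - al - be)). split.
  - split; apply Rnot_le_lt; intros Hle.
    + replace xs with al in Hm by lra. lra.
    + replace xs with be in Hm by lra. lra.
  - intros y Hy. specialize (Hmin y Hy). unfold d in Hmin.
    assert (Q y - Q xs = (s + kk / 2 * (2 * xs - al - be)) * (y - xs) + kk / 2 * (y - xs) ^ 2)
      by (unfold Q; field).
    lra.
Qed.

(* If every parabola touching the continuous [u] from below has curvature at
   most [k], then [u] lies above each chord minus the bump: otherwise [u] dips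
   below a slightly more curved parabola through the chord ends. *)
Lemma chord_lower (u : R -> R) (al be k : R) : al < be ->
  (forall t, al <= t <= be -> continuity_pt u t) ->
  (forall x p q, al < x < be -> touch_below u al be x p q -> q <= k) ->
  forall t, al <= t <= be ->
    u al + (u be - u al) * (t - al) / (be - al) - k / 2 * (t - al) * (be - t) <= u t.
Proof.
  intros Hab Hc Htouch t Ht.
  destruct (Req_dec t al) as [->|Hal]; [right; field; lra|].
  destruct (Req_dec t be) as [->|Hbe]; [right; field; lra|].
  apply Rnot_lt_le. intros Hlt.
  set (eta := u al + (u be - u al) * (t - al) / (be - al) - k / 2 * (t - al) * (be - t) - u t).
  assert (HP : 0 < (t - al) * (be - t)) by (apply Rmult_lt_0_compat; lra).
  assert (Heta : 0 < eta / ((t - al) * (be - t))) by (apply Rdiv_lt_0_compat; [unfold eta|]; lra).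
  destruct (touch_below_of_dip u al be (k + eta / ((t - al) * (be - t))) t Hab Hc Ht) as [x [p [Hx Htb]]].
  - assert (E : eta / ((t - al) * (be - t)) * ((t - al) * (be - t)) = eta) by (field; lra).
    unfold eta in E |- *. nra.
  - specialize (Htouch x p _ Hx Htb). lra.
Qed.

Lemma chord_upper (u : R -> R) (al be k : R) : al < be ->
  (forall t, al <= t <= be -> continuity_pt u t) ->
  (forall x p q, al < x < be -> touch_above u al be x p q -> - k <= q) ->
  forall t, al <= t <= be ->
    u t <= u al + (u be - u al) * (t - al) / (be - al) + k / 2 * (t - al) * (be - t).
Proof.
  intros Hab Hc Htouch t Ht.
  assert (H := chord_lower (fun y => - u y) al be k Hab).
  cbv beta in H.
  assert (H2 : - u al + (- u be - - u al) * (t - al) / (be - al) - k / 2 * (t - al) * (be - t) <= - u t).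
  { apply H; auto.
    - intros y Hy. apply continuity_pt_opp. auto.
    - intros x p q Hx Hb. enough (- k <= - q) by lra.
      apply (Htouch x (- p) (- q) Hx). intros y Hy. specialize (Hb y Hy). lra. }
  replace ((- u be - - u al) * (t - al) / (be - al)) with (- ((u be - u al) * (t - al) / (be - al)))
    in H2 by (field; lra).
  lra.
Qed.

Lemma chord_bound_of_touching (u : R -> R) (a0 b0 k : R) :
  (forall t, a0 <= t <= b0 -> continuity_pt u t) ->
  (forall al be x p q, a0 <= al -> be <= b0 -> al < x < be ->
     touch_below u al be x p q -> q <= k) ->
  (forall al be x p q, a0 <= al -> be <= b0 -> al < x < be ->
     touch_above u al be x p q -> - k <= q) ->
  chord_bound u a0 b0 k.
Proof.
  intros Hc Hbelow Habove al t be H1 H2 H3 H4. apply Rabs_le.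
  assert (A := chord_lower u al be k ltac:(lra) ltac:(intros; apply Hc; lra)
    ltac:(intros; eapply Hbelow; eauto) t ltac:(lra)).
  assert (B := chord_upper u al be k ltac:(lra) ltac:(intros; apply Hc; lra)
    ltac:(intros; eapply Habove; eauto) t ltac:(lra)).
  lra.
Qed.

Lemma slope_sym (u : R -> R) (x y : R) : x <> y -> slope u x y = slope u y x.
Proof. intros H. unfold slope. field. split; lra. Qed.

Lemma abs_div_le (e d C : R) : 0 < d -> Rabs e <= C * d -> Rabs (e / d) <= C.
Proof.
  intros Hd H. unfold Rdiv. rewrite Rabs_mult, (Rabs_right (/ d)) by (left; apply Rinv_0_lt_compat; lra).
  apply Rmult_le_reg_r with d; [lra|]. rewrite Rmult_assoc, Rinv_l by lra. lra.
Qed.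

Lemma abs_div_lt (e d C : R) : 0 < d -> Rabs e < C * d -> Rabs (e / d) < C.
Proof.
  intros Hd H. unfold Rdiv. rewrite Rabs_mult, (Rabs_right (/ d)) by (left; apply Rinv_0_lt_compat; lra).
  apply Rmult_lt_reg_r with d; [lra|]. rewrite Rmult_assoc, Rinv_l by lra. lra.
Qed.

Lemma three_point (u : R -> R) (k p1 p2 p3 : R) : p1 < p2 < p3 ->
  Rabs (u p2 - (u p1 + (u p3 - u p1) * (p2 - p1) / (p3 - p1))) <= k / 2 * (p2 - p1) * (p3 - p2) ->
  Rabs (slope u p1 p2 - slope u p1 p3) <= k / 2 * (p3 - p2) /\
  Rabs (slope u p2 p3 - slope u p1 p3) <= k / 2 * (p2 - p1).
Proof.
  intros Hp He. set (e := u p2 - (u p1 + (u p3 - u p1) * (p2 - p1) / (p3 - p1))) in *.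
  split.
  - replace (slope u p1 p2 - slope u p1 p3) with (e / (p2 - p1)) by (unfold slope, e; field; lra).
    apply abs_div_le; [lra|]. lra.
  - replace (slope u p2 p3 - slope u p1 p3) with (- e / (p3 - p2)) by (unfold slope, e; field; lra).
    apply abs_div_le; [lra|]. rewrite Rabs_Ropp. lra.
Qed.

Lemma slope_difference (u : R -> R) (a0 b0 k : R) : 0 <= k -> chord_bound u a0 b0 k ->
  forall x y z, a0 <= x <= b0 -> a0 <= y <= b0 -> a0 <= z <= b0 -> y <> x -> z <> x ->
  Rabs (slope u x y - slope u x z) <= k / 2 * (Rabs (y - x) + Rabs (z - x)).
Proof.
  intros Hk H.
  assert (TP : forall p1 p2 p3, a0 <= p1 -> p1 < p2 -> p2 < p3 -> p3 <= b0 ->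
    Rabs (slope u p1 p2 - slope u p1 p3) <= k / 2 * (p3 - p2) /\
    Rabs (slope u p2 p3 - slope u p1 p3) <= k / 2 * (p2 - p1)).
  { intros p1 p2 p3 H1 H2 H3 H4. apply three_point; [lra | apply H; lra]. }
  assert (Ordered : forall x y z, a0 <= x <= b0 -> a0 <= y <= b0 -> a0 <= z <= b0 ->
    y <> x -> z <> x -> y < z ->
    Rabs (slope u x y - slope u x z) <= k / 2 * (Rabs (y - x) + Rabs (z - x))).
  { intros x y z Hx Hy Hz Hyx Hzx Hyz.
    destruct (Rlt_le_dec x y) as [Hxy|Hxy]; [|destruct (Rlt_le_dec x z) as [Hxz|Hxz]].
    - destruct (TP x y z) as [T1 _]; try lra.
      rewrite (Rabs_right (z - x)), (Rabs_right (y - x)) by lra. nra.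
    - destruct (TP y x z) as [T1 T2]; try lra.
      rewrite (slope_sym u x y) by lra.
      rewrite (Rabs_right (z - x)), (Rabs_left (y - x)) by lra.
      replace (slope u y x - slope u x z) with ((slope u y x - slope u y z) - (slope u x z - slope u y z)) by ring.
      eapply Rle_trans; [apply Rabs_triang|]. rewrite Rabs_Ropp. nra.
    - destruct (TP y z x) as [_ T2]; try lra.
      rewrite (slope_sym u x y), (slope_sym u x z) by lra.
      rewrite (Rabs_left (z - x)), (Rabs_left (y - x)) by lra.
      rewrite Rabs_minus_sym. nra. }
  intros x y z Hx Hy Hz Hyx Hzx.
  destruct (Rtotal_order y z) as [Hyz|[<-|Hyz]].
  - apply Ordered; auto.
  - rewrite Rminus_diag, Rabs_R0. pose proof (Rabs_pos (y - x)). nra.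
  - rewrite Rabs_minus_sym, Rplus_comm. apply Ordered; auto.
Qed.

Lemma vanishing_step (r e : R) : 0 <= r -> 0 < e ->
  exists N : nat, forall n, (N <= n)%nat -> r / (INR n + 2) < e.
Proof.
  intros Hr He. destruct (archimed_cor1 (e / (r + 1))) as [N [HN HN0]].
  { apply Rdiv_lt_0_compat; lra. }
  exists N. intros n Hn. apply le_INR in Hn. apply lt_INR in HN0. simpl in HN0.
  assert (HiN : 0 < / INR N) by (apply Rinv_0_lt_compat; lra).
  assert (Hle : / (INR n + 2) <= / INR N) by (apply Rinv_le_contravar; lra).
  assert (Hlt : (r + 1) * / INR N < e).
  { apply Rmult_lt_reg_r with (/ (r + 1)); [apply Rinv_0_lt_compat; lra|].
    replace ((r + 1) * / INR N * / (r + 1)) with (/ INR N) by (field; lra). exact HN. }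
  unfold Rdiv. nra.
Qed.

Lemma derive_of_slope_bound (u : R -> R) (x r K D : R) : 0 < r -> 0 <= K ->
  (forall y, 0 < Rabs (y - x) < r -> Rabs (slope u x y - D) <= K * Rabs (y - x)) ->
  is_derive u x D.
Proof.
  intros Hr HK HB. apply is_derive_Reals. intros eps Heps.
  assert (Hd : 0 < Rmin r (eps / (K + 1))) by (apply Rmin_pos; [lra | apply Rdiv_lt_0_compat; lra]).
  exists (mkposreal _ Hd). intros h Hh0 Hh. simpl in Hh.
  assert (Hh1 : Rabs h < r) by (eapply Rlt_le_trans; [exact Hh | apply Rmin_l]).
  assert (Hh2 : Rabs h < eps / (K + 1)) by (eapply Rlt_le_trans; [exact Hh | apply Rmin_r]).
  replace ((u (x + h) - u x) / h) with (slope u x (x + h)) by (unfold slope; f_equal; ring).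
  specialize (HB (x + h)). replace (x + h - x) with h in HB by ring.
  specialize (HB (conj (Rabs_pos_lt h Hh0) Hh1)).
  assert (K * Rabs h <= K * (eps / (K + 1))) by (apply Rmult_le_compat_l; lra).
  assert (K * (eps / (K + 1)) < eps).
  { apply Rmult_lt_reg_r with (K + 1); [lra|].
    replace (K * (eps / (K + 1)) * (K + 1)) with (K * eps) by (field; lra). nra. }
  lra.
Qed.

(* If the slopes from [x] form a Cauchy family as the other endpoint tends to
   [x], with the rate [K |y - x|], then they converge to some [D] at that rate:
   [D] is the limit of the slopes along the sequence [x + r / (n + 2)]. *)
Lemma slope_limit (u : R -> R) (x r K : R) : 0 < r -> 0 <= K ->
  (forall y z, 0 < Rabs (y - x) < r -> 0 < Rabs (z - x) < r ->
     Rabs (slope u x y - slope u x z) <= K * (Rabs (y - x) + Rabs (z - x))) ->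
  exists D, forall y, 0 < Rabs (y - x) < r -> Rabs (slope u x y - D) <= K * Rabs (y - x).
Proof.
  intros Hr HK H.
  set (step := fun n : nat => r / (INR n + 2)).
  set (w := fun n : nat => slope u x (x + step n)).
  assert (Hstep : forall n, 0 < Rabs (x + step n - x) < r /\ Rabs (x + step n - x) = step n).
  { intros n. pose proof (pos_INR n).
    replace (x + step n - x) with (step n) by ring. unfold step.
    assert (0 < r / (INR n + 2)) by (apply Rdiv_lt_0_compat; lra).
    assert (r / (INR n + 2) < r).
    { apply Rmult_lt_reg_r with (INR n + 2); [lra|]. field_simplify; nra. }
    rewrite Rabs_right by lra. lra. }
  assert (Hsmall : forall e, 0 < e -> exists N : nat, forall n, (N <= n)%nat -> K * step n < e).
  { intros e He. destruct (vanishing_step (K * r) e ltac:(nra) He) as [N HN].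
    exists N. intros n Hn. specialize (HN n Hn). unfold step.
    replace (K * (r / (INR n + 2))) with (K * r / (INR n + 2)) by (pose proof (pos_INR n); field; lra).
    exact HN. }
  assert (Hcauchy : ex_lim_seq_cauchy w).
  { intros eps. destruct (Hsmall (eps / 2)) as [N HN]; [destruct eps; simpl; lra|].
    exists N. intros n m Hn Hm. unfold w.
    destruct (Hstep n) as [Hn1 Hn2]. destruct (Hstep m) as [Hm1 Hm2].
    eapply Rle_lt_trans; [apply H; auto|].
    rewrite Hn2, Hm2. pose proof (HN n Hn). pose proof (HN m Hm). lra. }
  apply ex_lim_seq_cauchy_corr, Lim_seq_correct', is_lim_seq_spec in Hcauchy.
  exists (real (Lim_seq w)). intros y Hy. apply Rnot_lt_le. intros Hlt.
  set (D := real (Lim_seq w)) in *. simpl in Hcauchy.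
  set (e := Rabs (slope u x y - D) - K * Rabs (y - x)).
  assert (He : 0 < e / 2) by (unfold e; lra).
  destruct (Hcauchy (mkposreal _ He)) as [N1 HN1]. destruct (Hsmall (e / 2) He) as [N2 HN2].
  set (n := max N1 N2).
  specialize (HN1 n (Nat.le_max_l _ _)). specialize (HN2 n (Nat.le_max_r _ _)). simpl in HN1.
  destruct (Hstep n) as [Hn1 Hn2].
  specialize (H y (x + step n) Hy Hn1). rewrite Hn2 in H. fold (w n) in H.
  assert (Rabs (slope u x y - D) <= Rabs (slope u x y - w n) + Rabs (w n - D)).
  { replace (slope u x y - D) with ((slope u x y - w n) + (w n - D)) by ring. apply Rabs_triang. }
  unfold e in *. lra.
Qed.

Lemma chord_bound_derive (u : R -> R) (a0 b0 k : R) : 0 <= k -> chord_bound u a0 b0 k ->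
  forall x, a0 < x < b0 -> is_derive u x (Derive u x) /\
    forall y, a0 <= y <= b0 -> y <> x -> Rabs (slope u x y - Derive u x) <= k / 2 * Rabs (y - x).
Proof.
  intros Hk H x Hx.
  pose proof (slope_difference u a0 b0 k Hk H) as SD.
  set (r := Rmin (x - a0) (b0 - x)).
  assert (Hr : 0 < r) by (apply Rmin_pos; lra).
  assert (Hin : forall y, Rabs (y - x) < r -> a0 <= y <= b0).
  { intros y Hy. pose proof (Rmin_l (x - a0) (b0 - x)). pose proof (Rmin_r (x - a0) (b0 - x)).
    apply Rabs_def2 in Hy. fold r in H0, H1. lra. }
  assert (Hne : forall y, 0 < Rabs (y - x) -> y <> x).
  { intros y Hy ->. rewrite Rminus_diag, Rabs_R0 in Hy. lra. }
  destruct (slope_limit u x r (k / 2) Hr ltac:(lra)) as [D HB].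
  { intros y z Hy Hz. apply SD; try lra; try apply Hin; try apply Hne; tauto. }
  pose proof (derive_of_slope_bound u x r (k / 2) D Hr ltac:(lra) HB) as Hd.
  rewrite (is_derive_unique _ _ _ Hd). split; [exact Hd|].
  intros y Hy Hyx.
  enough (Rabs (slope u x y - D) - k / 2 * Rabs (y - x) <= 0) by lra.
  apply (le_of_small _ k r Hr). intros h Hh.
  assert (Hxh : x + h - x = h) by ring.
  assert (Hz : 0 < Rabs (x + h - x) < r) by (rewrite Hxh, Rabs_right; lra).
  specialize (HB _ Hz). specialize (SD x y (x + h) ltac:(lra) Hy (Hin _ (proj2 Hz)) Hyx ltac:(lra)).
  rewrite Hxh in HB, SD. rewrite (Rabs_right h) in HB, SD by lra.
  assert (Rabs (slope u x y - D) <= Rabs (slope u x y - slope u x (x + h)) + Rabs (slope u x (x + h) - D)).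
  { replace (slope u x y - D) with ((slope u x y - slope u x (x + h)) + (slope u x (x + h) - D)) by ring.
    apply Rabs_triang. }
  lra.
Qed.

Lemma chord_bound_lipschitz (u : R -> R) (a0 b0 k : R) : 0 <= k -> chord_bound u a0 b0 k ->
  forall x y, a0 < x < b0 -> a0 < y < b0 -> Rabs (Derive u x - Derive u y) <= k * Rabs (x - y).
Proof.
  intros Hk H x y Hx Hy.
  destruct (Req_dec x y) as [<-|E]; [rewrite !Rminus_diag, Rabs_R0; lra|].
  destruct (chord_bound_derive u a0 b0 k Hk H x Hx) as [_ B1].
  destruct (chord_bound_derive u a0 b0 k Hk H y Hy) as [_ B2].
  specialize (B1 y ltac:(lra) ltac:(auto)). specialize (B2 x ltac:(lra) ltac:(auto)).
  rewrite <- (slope_sym u x y E) in B2. rewrite (Rabs_minus_sym y x) in B1.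
  replace (Derive u x - Derive u y) with (- (slope u x y - Derive u x) + (slope u x y - Derive u y)) by ring.
  eapply Rle_trans; [apply Rabs_triang|]. rewrite Rabs_Ropp. lra.
Qed.

Lemma touching_slope (u : R -> R) (al be x D p q : R) : al < x < be -> is_derive u x D ->
  touch_below u al be x p q \/ touch_above u al be x p q -> p = D.
Proof.
  intros Hx Hd Htouch.
  set (r := Rmin (x - al) (be - x)).
  assert (Hr : 0 < r) by (apply Rmin_pos; lra).
  assert (Hin : forall y, Rabs (y - x) < r -> al <= y <= be).
  { intros y Hy. pose proof (Rmin_l (x - al) (be - x)). pose proof (Rmin_r (x - al) (be - x)).
    apply Rabs_def2 in Hy. fold r in H, H0. lra. }
  set (par := fun y => u x + p * (y - x) + q / 2 * (y - x) ^ 2).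
  assert (Hpar : is_derive par x p) by (unfold par; auto_derive; auto; ring).
  destruct Htouch as [Hb|Ha].
  - enough (D - p = 0) by lra.
    apply (derive_local_min (fun y => u y - par y) x (D - p) r Hr).
    + exact (is_derive_minus u par x D p Hd Hpar).
    + intros y Hy. specialize (Hb y (Hin y Hy)). unfold par. rewrite Rminus_diag. lra.
  - enough (p - D = 0) by lra.
    apply (derive_local_min (fun y => par y - u y) x (p - D) r Hr).
    + exact (is_derive_minus par u x p D Hpar Hd).
    + intros y Hy. specialize (Ha y (Hin y Hy)). unfold par. rewrite Rminus_diag. lra.
Qed.

Lemma touch_below_slope_nonneg (u : R -> R) (al be x p q : R) :
  (forall x y, 0 <= x -> x <= y -> u x <= u y) -> 0 <= al -> al < x < be ->
  touch_below u al be x p q -> 0 <= p.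
Proof.
  intros Hm Hal Hx Ht.
  enough (- p <= 0) by lra.
  apply (le_of_small _ (- q / 2) (x - al)); [lra|]. intros h Hh.
  specialize (Ht (x - h) ltac:(lra)). assert (u (x - h) <= u x) by (apply Hm; lra).
  replace (x - h - x) with (- h) in Ht by ring. nra.
Qed.

Lemma touch_above_slope_nonneg (u : R -> R) (al be x p q : R) :
  (forall x y, 0 <= x -> x <= y -> u x <= u y) -> 0 <= al -> al < x < be ->
  touch_above u al be x p q -> 0 <= p.
Proof.
  intros Hm Hal Hx Ht.
  enough (- p <= 0) by lra.
  apply (le_of_small _ (q / 2) (be - x)); [lra|]. intros h Hh.
  specialize (Ht (x + h) ltac:(lra)). assert (u x <= u (x + h)) by (apply Hm; lra).
  replace (x + h - x) with h in Ht by ring. nra.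
Qed.

Lemma touch_below_shift (u : R -> R) (g al be z p q : R) :
  touch_below (fun y => u y - g * y ^ 2 / 2) al be z p q -> touch_below u al be z (p + g * z) (q + g).
Proof.
  intros Ht y Hy. specialize (Ht y Hy). cbv beta in Ht.
  replace (u z + (p + g * z) * (y - z) + (q + g) / 2 * (y - z) ^ 2)
    with (u z - g * z ^ 2 / 2 + p * (y - z) + q / 2 * (y - z) ^ 2 + g * y ^ 2 / 2) by field.
  lra.
Qed.

Lemma touch_above_shift (u : R -> R) (g al be z p q : R) :
  touch_above (fun y => u y - g * y ^ 2 / 2) al be z p q -> touch_above u al be z (p + g * z) (q + g).
Proof.
  intros Ht y Hy. specialize (Ht y Hy). cbv beta in Ht.
  replace (u z + (p + g * z) * (y - z) + (q + g) / 2 * (y - z) ^ 2)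
    with (u z - g * z ^ 2 / 2 + p * (y - z) + q / 2 * (y - z) ^ 2 + g * y ^ 2 / 2) by field.
  lra.
Qed.

Lemma growth_from_derivative (f df : R -> R) (C : R) (n : nat) : 0 <= C ->
  (forall s, is_derive f s (df s)) -> f 0 = 0 ->
  (forall s, Rabs (df s) <= C * Rabs s ^ n * exp (Rabs s)) ->
  forall t, Rabs (f t) <= C * Rabs t ^ S n * exp (Rabs t).
Proof.
  intros HC Hd H0 Hb t.
  destruct (MVT_gen f 0 t df) as [xi [Hxi E]].
  - intros; apply Hd.
  - intros; apply continuity_pt_of_ex_derive. eexists; apply Hd.
  - rewrite H0, !Rminus_0_r in E. rewrite E, Rabs_mult.
    assert (Hx : Rabs xi <= Rabs t).
    { unfold Rmin, Rmax in Hxi. destruct (Rle_dec 0 t).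
      - rewrite !Rabs_right; lra.
      - rewrite (Rabs_left t) by lra. apply Rabs_le. lra. }
    assert (Rabs xi ^ n <= Rabs t ^ n) by (apply pow_incr; split; [apply Rabs_pos | exact Hx]).
    assert (exp (Rabs xi) <= exp (Rabs t)) by (apply exp_le; exact Hx).
    assert (Hdf : Rabs (df xi) <= C * Rabs t ^ n * exp (Rabs t)).
    { eapply Rle_trans; [apply Hb|]. apply Rmult_le_compat; try lra.
      - apply Rmult_le_pos; [lra | apply pow_le, Rabs_pos].
      - left; apply exp_pos.
      - apply Rmult_le_compat_l; lra. }
    simpl pow. pose proof (Rabs_pos t).
    replace (C * (Rabs t * Rabs t ^ n) * exp (Rabs t)) with (C * Rabs t ^ n * exp (Rabs t) * Rabs t) by ring.
    apply Rmult_le_compat_r; lra.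
Qed.

Lemma exp_taylor2 (t : R) : Rabs (exp t - 1 - t - t ^ 2 / 2) <= 1 * Rabs t ^ 3 * exp (Rabs t).
Proof.
  assert (B0 : forall s, Rabs (exp s - 1) <= 1 * Rabs s ^ 1 * exp (Rabs s)).
  { apply (growth_from_derivative (fun s => exp s - 1) exp 1 0); [lra | | |].
    - intros s. auto_derive; auto; ring.
    - rewrite exp_0; ring.
    - intros s. rewrite Rabs_right by (left; apply exp_pos). simpl. rewrite !Rmult_1_l.
      apply exp_le, Rle_abs. }
  assert (B1 : forall s, Rabs (exp s - 1 - s) <= 1 * Rabs s ^ 2 * exp (Rabs s)).
  { apply (growth_from_derivative (fun s => exp s - 1 - s) (fun s => exp s - 1) 1 1); [lra | | | exact B0].
    - intros s. auto_derive; auto; ring.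
    - rewrite exp_0; ring. }
  apply (growth_from_derivative (fun s => exp s - 1 - s - s ^ 2 / 2) (fun s => exp s - 1 - s) 1 2);
    [lra | | | exact B1].
  - intros s. auto_derive; auto; field.
  - rewrite exp_0; field.
Qed.

Definition Phi0 (w : R) : R := if Req_EM_T w 0 then 1 else (exp w - 1) / w.

Lemma Phi0_mvt (w : R) : exists xi, Rmin 0 w <= xi <= Rmax 0 w /\ Phi0 w = exp xi.
Proof.
  unfold Phi0. destruct (Req_EM_T w 0) as [->|E].
  - exists 0. rewrite Rmin_left, Rmax_left, exp_0 by lra. lra.
  - destruct (MVT_gen exp 0 w exp) as [xi [Hxi Ex]].
    + intros; apply is_derive_exp.
    + intros; apply continuity_pt_of_ex_derive. eexists; apply is_derive_exp.
    + exists xi. split; auto. rewrite exp_0 in Ex. rewrite Ex. field. lra.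
Qed.

Lemma Phi0_pos (w : R) : 0 < Phi0 w.
Proof. destruct (Phi0_mvt w) as [xi [_ ->]]. apply exp_pos. Qed.

Lemma Phi0_derive0 : is_derive Phi0 0 (1 / 2).
Proof.
  apply is_derive_Reals. intros eps Heps.
  exists (mkposreal (Rmin 1 (eps / 3)) ltac:(apply Rmin_pos; lra)).
  intros h Hh0 Hh. simpl in Hh.
  assert (H1 : Rabs h < 1) by (eapply Rlt_le_trans; [exact Hh | apply Rmin_l]).
  assert (H2 : Rabs h < eps / 3) by (eapply Rlt_le_trans; [exact Hh | apply Rmin_r]).
  unfold Phi0. rewrite Rplus_0_l.
  destruct (Req_EM_T h 0) as [E|_]; [contradiction|].
  destruct (Req_EM_T 0 0) as [_|E]; [|lra].
  replace (((exp h - 1) / h - 1) / h - 1 / 2) with ((exp h - 1 - h - h ^ 2 / 2) / h ^ 2) by (field; auto).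
  assert (Hh2 : 0 < Rabs h) by (apply Rabs_pos_lt; auto).
  assert (He : exp (Rabs h) <= 3) by (eapply Rle_trans; [apply exp_le; left; exact H1 | apply exp_le_3]).
  unfold Rdiv. rewrite Rabs_mult, Rabs_inv, <- RPow_abs.
  apply Rle_lt_trans with (Rabs h ^ 2 * (Rabs h * 3) * / Rabs h ^ 2).
  - apply Rmult_le_compat_r; [left; apply Rinv_0_lt_compat, pow_lt; auto|].
    replace (h ^ 2 * / 2) with (h ^ 2 / 2) by field.
    eapply Rle_trans; [apply exp_taylor2|].
    replace (1 * Rabs h ^ 3 * exp (Rabs h)) with (Rabs h ^ 2 * (Rabs h * exp (Rabs h))) by ring.
    apply Rmult_le_compat_l; [apply pow_le, Rabs_pos|]. apply Rmult_le_compat_l; [apply Rabs_pos | exact He].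
  - replace (Rabs h ^ 2 * (Rabs h * 3) * / Rabs h ^ 2) with (Rabs h * 3) by (field; lra). lra.
Qed.

Lemma Phi0_ex_derive (w : R) : ex_derive Phi0 w.
Proof.
  destruct (Req_EM_T w 0) as [->|E].
  - eexists. apply Phi0_derive0.
  - apply (ex_derive_ext_loc (fun t => (exp t - 1) / t)).
    + apply (locally_of_ball w (Rabs w)); [apply Rabs_pos_lt; auto|].
      intros y Hy. unfold Phi0. destruct (Req_EM_T y 0) as [->|]; auto.
      rewrite Rminus_0_l, Rabs_Ropp in Hy. lra.
    + auto_derive. auto.
Qed.

Lemma fH_repr (mu lam a z : R) : 0 < lam -> 0 < a ->
  fH mu lam a z = mu * z + lam * ln (a * Phi0 (a / lam * (1 - z))).
Proof.
  intros Hl Ha. unfold fH, Phi0.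
  assert (Hb : a / lam <> 0) by (apply Rgt_not_eq, Rdiv_lt_0_compat; auto).
  destruct (Req_EM_T z 1) as [Ez|E]; destruct (Req_EM_T (a / lam * (1 - z)) 0) as [E2|E2].
  - subst z. rewrite !Rmult_1_r. reflexivity.
  - exfalso. apply E2. subst z. ring.
  - exfalso. apply Rmult_integral in E2. destruct E2; [auto | apply E; lra].
  - do 3 f_equal. field. split; [lra|]. split; [|lra].
    intros H. apply E2. rewrite H. ring.
Qed.

Lemma fH_ex_derive (mu lam a z : R) : 0 < lam -> 0 < a -> ex_derive (fH mu lam a) z.
Proof.
  intros Hl Ha.
  apply (ex_derive_ext (fun z => mu * z + lam * ln (a * Phi0 (a / lam * (1 - z))))).
  { intros t. symmetry. apply fH_repr; auto. }
  apply (ex_derive_plus (fun z => mu * z)); [apply ex_derive_scal, ex_derive_id|].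
  apply ex_derive_scal, (ex_derive_comp ln (fun z => a * Phi0 (a / lam * (1 - z)))).
  - eexists. apply is_derive_ln. apply Rmult_lt_0_compat; [auto | apply Phi0_pos].
  - apply ex_derive_scal, (ex_derive_comp Phi0 (fun z => a / lam * (1 - z))); [apply Phi0_ex_derive|].
    apply ex_derive_scal, (ex_derive_minus (fun _ => 1) (fun z => z));
      [apply ex_derive_const | apply ex_derive_id].
Qed.

Lemma fH_continuous (mu lam a z : R) : 0 < lam -> 0 < a -> continuity_pt (fH mu lam a) z.
Proof. intros Hl Ha. apply continuity_pt_of_ex_derive, fH_ex_derive; auto. Qed.

Lemma fH_upper (mu lam a : R) : 0 < lam -> 0 < a -> 0 < mu ->
  forall z, 0 <= z -> fH mu lam a z <= mu * z + (lam * ln a + a).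
Proof.
  intros Hl Ha Hm z Hz. rewrite fH_repr by auto.
  destruct (Phi0_mvt (a / lam * (1 - z))) as [xi [Hxi ->]].
  assert (Hb : 0 < a / lam) by (apply Rdiv_lt_0_compat; auto).
  assert (xi <= a / lam).
  { eapply Rle_trans; [apply Hxi|]. apply Rmax_lub; nra. }
  rewrite ln_mult, ln_exp by (auto; apply exp_pos).
  assert (lam * (ln a + xi) <= lam * (ln a + a / lam)) by (apply Rmult_le_compat_l; lra).
  replace (lam * (ln a + a / lam)) with (lam * ln a + a) in H0 by (field; lra). lra.
Qed.

Lemma ln_le_sub1 (y : R) : 0 < y -> ln y <= y - 1.
Proof. intros H. pose proof (exp_ineq1_le (ln y)). rewrite exp_ln in H0 by auto. lra. Qed.

(* The Hamiltonian is bounded below on [0, oo): near 0 by the mean value form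
   of [Phi0], and for large [z] because [mu z] dominates [lam ln z]. *)
Lemma fH_lower (mu lam a : R) : 0 < lam -> 0 < a -> 0 < mu ->
  exists m0, forall z, 0 <= z -> m0 <= fH mu lam a z.
Proof.
  intros Hl Ha Hm.
  set (b := a / lam). assert (Hb : 0 < b) by (apply Rdiv_lt_0_compat; auto).
  assert (Hlb : lam * b = a) by (unfold b; field; lra).
  set (k := mu / lam). assert (Hk : 0 < k) by (apply Rdiv_lt_0_compat; auto).
  assert (Hkl : lam * k = mu) by (unfold k; field; lra).
  assert (He : exp (- b) < 1) by (rewrite <- exp_0; apply exp_increasing; lra).
  set (C := lam * ln (lam * (1 - exp (- b))) + lam + lam * ln k).
  exists (Rmin (lam * ln a - a) (C + mu)).
  intros z Hz. rewrite fH_repr by auto. fold b.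
  destruct (Rle_lt_dec z 2) as [Hz2|Hz2].
  - eapply Rle_trans; [apply Rmin_l|].
    destruct (Phi0_mvt (b * (1 - z))) as [xi [Hxi ->]].
    assert (- b <= xi) by (eapply Rle_trans; [|apply Hxi]; apply Rmin_glb; nra).
    rewrite ln_mult, ln_exp by (auto; apply exp_pos). nra.
  - eapply Rle_trans; [apply Rmin_r|].
    unfold Phi0. destruct (Req_EM_T (b * (1 - z)) 0) as [E|E]; [nra|].
    set (w := b * (1 - z)) in *.
    assert (Hw : w < - b) by (unfold w; nra).
    assert (exp w <= exp (- b)) by (apply exp_le; lra).
    assert (Hpos : 0 < lam * (1 - exp (- b)) / (z - 1))
      by (apply Rdiv_lt_0_compat; [apply Rmult_lt_0_compat|]; lra).
    assert (Hge : lam * (1 - exp (- b)) / (z - 1) <= a * ((exp w - 1) / w)).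
    { replace (a * ((exp w - 1) / w)) with (lam * (1 - exp w) / (z - 1))
        by (unfold w; rewrite <- Hlb; field; split; [lra | split; lra]).
      unfold Rdiv. apply Rmult_le_compat_r; [left; apply Rinv_0_lt_compat; lra|].
      apply Rmult_le_compat_l; lra. }
    assert (L1 : ln (lam * (1 - exp (- b)) / (z - 1)) <= ln (a * ((exp w - 1) / w))).
    { destruct Hge as [Hlt|Heq]; [left; apply ln_increasing; auto | rewrite Heq; lra]. }
    unfold Rdiv at 1 in L1.
    rewrite ln_mult, ln_Rinv in L1 by (try apply Rmult_lt_0_compat; try apply Rinv_0_lt_compat; lra).
    assert (L2 : ln k + ln (z - 1) <= k * (z - 1) - 1) by (rewrite <- ln_mult by lra; apply ln_le_sub1; nra).
    unfold C. nra.
Qed.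

Lemma fH_0_pos (mu lam a : R) : 0 < lam -> 1 < a -> 0 < fH mu lam a 0.
Proof.
  intros Hl Ha. rewrite fH_repr by lra.
  destruct (Phi0_mvt (a / lam * (1 - 0))) as [xi [Hxi ->]].
  assert (Hb : 0 < a / lam) by (apply Rdiv_lt_0_compat; lra).
  assert (0 <= xi) by (eapply Rle_trans; [|apply Hxi]; apply Rmin_glb; lra).
  assert (1 <= exp xi) by (rewrite <- exp_0; apply exp_le; lra).
  assert (ln 1 < ln (a * exp xi)) by (apply ln_increasing; nra).
  rewrite ln_1 in H1. nra.
Qed.

(* Coefficient of the quartic penalty that turns a parabola touching a function
   bounded by [M] on a window of radius [r] into a global test function. *)
Definition penalty (M p q r : R) : R := 2 * M / r ^ 4 + Rabs p / r ^ 3 + Rabs q / (2 * r ^ 2).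

Lemma penalty_dominates (M p q r d : R) : 0 < r -> 0 <= M -> r <= Rabs d ->
  p * d + q / 2 * d ^ 2 - penalty M p q r * d ^ 4 <= - 2 * M.
Proof.
  intros Hr HM Hd. unfold penalty.
  set (t := Rabs d) in *.
  assert (H2 : d ^ 2 = t ^ 2) by (unfold t; rewrite pow2_abs; reflexivity).
  assert (H4 : d ^ 4 = t ^ 4) by (replace (d ^ 4) with ((d ^ 2) ^ 2) by ring; rewrite H2; ring).
  assert (Hpd : p * d <= Rabs p * t) by (unfold t; rewrite <- Rabs_mult; apply Rle_abs).
  assert (Hq : q / 2 * d ^ 2 <= Rabs q / 2 * t ^ 2).
  { rewrite H2. apply Rmult_le_compat_r; [apply pow2_ge_0 | pose proof (Rle_abs q); lra]. }
  rewrite H4.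
  set (m := t / r).
  assert (Ht : t = m * r) by (unfold m; field; lra).
  assert (Hm : 1 <= m).
  { unfold m. apply Rmult_le_reg_r with r; [lra|]. unfold Rdiv. rewrite Rmult_assoc, Rinv_l by lra. lra. }
  replace ((2 * M / r ^ 4 + Rabs p / r ^ 3 + Rabs q / (2 * r ^ 2)) * t ^ 4)
    with (2 * M * m ^ 4 + Rabs p * r * m ^ 4 + Rabs q / 2 * r ^ 2 * m ^ 4) by (rewrite Ht; field; apply Rgt_not_eq; lra).
  assert (m ^ 2 >= m) by nra.
  assert (m ^ 4 >= m ^ 2) by (replace (m ^ 4) with (m ^ 2 * m ^ 2) by ring; nra).
  pose proof (Rabs_pos p). pose proof (Rabs_pos q).
  assert (Rabs p * t = Rabs p * r * m) by (rewrite Ht; ring).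
  assert (Rabs q / 2 * t ^ 2 = Rabs q / 2 * r ^ 2 * m ^ 2) by (rewrite Ht; field).
  assert (Rabs p * r * m ^ 4 >= Rabs p * r * m) by (apply Rle_ge, Rmult_le_compat_l; nra).
  assert (Rabs q / 2 * r ^ 2 * m ^ 4 >= Rabs q / 2 * r ^ 2 * m ^ 2).
  { apply Rle_ge, Rmult_le_compat_l; [apply Rmult_le_pos; [lra | apply pow2_ge_0] | lra]. }
  nra.
Qed.

Lemma penalized_touch_above (w : R -> R) (M x al be p q : R) :
  (forall y, 0 <= y -> Rabs (w y) <= M) -> 0 <= al -> al < x < be ->
  touch_above w al be x p q ->
  forall y, 0 <= y -> w y <= w x + p * (y - x) + q / 2 * (y - x) ^ 2
                               + penalty M p q (Rmin (x - al) (be - x)) * (y - x) ^ 4.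
Proof.
  intros HM Hal Hx Ht y Hy.
  set (r := Rmin (x - al) (be - x)).
  assert (Hr : 0 < r) by (apply Rmin_pos; lra).
  assert (Hrl : r <= x - al) by apply Rmin_l.
  assert (Hrr : r <= be - x) by apply Rmin_r.
  assert (HM0 : 0 <= M) by (specialize (HM 0 (Rle_refl 0)); pose proof (Rabs_pos (w 0)); lra).
  assert (Hpen : 0 <= penalty M p q r).
  { unfold penalty. pose proof (Rabs_pos p). pose proof (Rabs_pos q).
    assert (0 < r ^ 2) by (apply pow_lt; lra). assert (0 < r ^ 3) by (apply pow_lt; lra).
    assert (0 < r ^ 4) by (apply pow_lt; lra).
    repeat apply Rplus_le_le_0_compat; apply Rmult_le_pos; try lra; left; apply Rinv_0_lt_compat; lra. }
  assert (H4 : 0 <= (y - x) ^ 4) by (replace ((y - x) ^ 4) with (((y - x) ^ 2) ^ 2) by ring; apply pow2_ge_0).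
  destruct (Rle_lt_dec al y) as [H1|H1]; [destruct (Rle_lt_dec y be) as [H2|H2]|].
  - specialize (Ht y (conj H1 H2)). nra.
  - assert (Hfar : r <= Rabs (y - x)) by (rewrite Rabs_right; lra).
    pose proof (penalty_dominates M (- p) (- q) r (y - x) Hr HM0 Hfar) as D.
    unfold penalty in D |- *. rewrite !Rabs_Ropp in D.
    pose proof (proj1 (Rabs_le_between _ _) (HM y Hy)). pose proof (proj1 (Rabs_le_between _ _) (HM x ltac:(lra))). lra.
  - assert (Hfar : r <= Rabs (y - x)) by (rewrite Rabs_left; lra).
    pose proof (penalty_dominates M (- p) (- q) r (y - x) Hr HM0 Hfar) as D.
    unfold penalty in D |- *. rewrite !Rabs_Ropp in D.
    pose proof (proj1 (Rabs_le_between _ _) (HM y Hy)). pose proof (proj1 (Rabs_le_between _ _) (HM x ltac:(lra))). lra.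
Qed.

Lemma test_function_C2 (x v0 p q K : R) :
  C2R (fun y => v0 + p * (y - x) + q / 2 * (y - x) ^ 2 + K * (y - x) ^ 4)
      (fun y => p + q * (y - x) + 4 * K * (y - x) ^ 3)
      (fun y => q + 12 * K * (y - x) ^ 2).
Proof.
  split; [|split].
  - intros y. auto_derive; auto; field.
  - intros y. auto_derive; auto; field.
  - intros y. apply continuity_pt_filterlim. reg.
Qed.

Lemma visc_sub_parabola (mu sigma c a lam : R) (v : R -> R) (M x al be p q : R) :
  visc_sub mu sigma c a lam v -> (forall y, 0 <= y -> Rabs (v y) <= M) ->
  0 < al -> al < x < be -> touch_above v al be x p q ->
  1 / 2 * sigma ^ 2 * q + fH mu lam a p - c * v x >= 0.
Proof.
  intros [_ [_ Hsub]] HM Hal Hx Ht.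
  set (K := penalty M p q (Rmin (x - al) (be - x))).
  assert (H := Hsub x _ _ _ ltac:(lra) (test_function_C2 x (v x) p q K)). cbv beta in H.
  rewrite Rminus_diag in H.
  replace (q + 12 * K * 0 ^ 2) with q in H by ring.
  replace (p + q * 0 + 4 * K * 0 ^ 3) with p in H by ring.
  apply H; [ring|].
  intros y Hy. pose proof (penalized_touch_above v M x al be p q HM ltac:(lra) Hx Ht y ltac:(lra)).
  fold K in H0. lra.
Qed.

Lemma visc_super_parabola (mu sigma c a lam : R) (v : R -> R) (M x al be p q : R) :
  visc_super mu sigma c a lam v -> (forall y, 0 <= y -> Rabs (v y) <= M) ->
  0 < al -> al < x < be -> touch_below v al be x p q ->
  1 / 2 * sigma ^ 2 * q + fH mu lam a p - c * v x <= 0.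
Proof.
  intros [_ [_ Hsuper]] HM Hal Hx Ht.
  set (K := penalty M (- p) (- q) (Rmin (x - al) (be - x))).
  assert (H := Hsuper x _ _ _ ltac:(lra) (test_function_C2 x (v x) p q (- K))). cbv beta in H.
  rewrite Rminus_diag in H.
  replace (q + 12 * - K * 0 ^ 2) with q in H by ring.
  replace (p + q * 0 + 4 * - K * 0 ^ 3) with p in H by ring.
  apply H; [ring|].
  intros y Hy.
  assert (HMo : forall y, 0 <= y -> Rabs (- v y) <= M) by (intros; rewrite Rabs_Ropp; auto).
  assert (Hto : touch_above (fun y => - v y) al be x (- p) (- q)) by (intros z Hz; specialize (Ht z Hz); lra).
  pose proof (penalized_touch_above _ M x al be _ _ HMo ltac:(lra) Hx Hto y ltac:(lra)).
  fold K in H0. lra.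
Qed.

Section ViscositySolution.

Context {mu sigma c a lam : R} {v : R -> R}.
Hypothesis HA : assumptionA mu sigma c a lam.
Hypothesis Hsol : visc_sol mu sigma c a lam v.
Hypothesis HL : classL v.

Let S := 1 / 2 * sigma ^ 2.

(* Only these consequences of (A) are used. *)
Lemma constants_pos : 0 < S /\ 0 < c /\ 1 < a /\ 0 < lam /\ 0 < mu.
Proof using HA.
  destruct HA as (Hs & Hc & Ha & Hl & Ha1 & Hmu).
  pose proof (Rmax_l 1 (2 * mu)). pose proof (Rmax_l c (sigma ^ 2 / 2)).
  assert (0 < sigma ^ 2) by (apply pow_lt; lra).
  unfold S. repeat split; lra.
Qed.

Lemma v_sub : visc_sub mu sigma c a lam v.
Proof using Hsol. apply Hsol. Qed.

Lemma v_super : visc_super mu sigma c a lam v.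
Proof using Hsol. apply Hsol. Qed.

Lemma v_zero : v 0 = 0.
Proof using Hsol. apply Hsol. Qed.

Lemma v_mono : forall x y, 0 <= x -> x <= y -> v x <= v y.
Proof using HL. apply HL. Qed.

Lemma v_bounded : exists M, forall y, 0 <= y -> 0 <= v y <= M.
Proof using Hsol HL.
  destruct HL as [_ [M HM]]. exists M. intros y Hy. split.
  - rewrite <- v_zero. apply v_mono; lra.
  - specialize (HM y Hy). apply Rabs_le_between in HM. lra.
Qed.

Lemma abs_of_bound (M : R) : (forall y, 0 <= y -> 0 <= v y <= M) ->
  forall y, 0 <= y -> Rabs (v y) <= M.
Proof. intros HM y Hy. specialize (HM y Hy). apply Rabs_le. lra. Qed.

Lemma v_cont (x : R) : 0 < x -> continuity_pt v x.
Proof using Hsol.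
  intros Hx. destruct Hsol as [Hc _]. apply continuity_pt_of_eps. intros eps He.
  destruct (Hc x (Rlt_le _ _ Hx) eps He) as [d [Hd H]].
  exists (Rmin d x). split; [apply Rmin_pos; lra|].
  intros y Hy. pose proof (Rmin_l d x). pose proof (Rmin_r d x).
  apply H; [apply Rabs_def2 in Hy; lra | lra].
Qed.

Lemma v_small_near0 (eps : R) : 0 < eps -> exists rho, 0 < rho /\ forall t, 0 <= t < rho -> v t < eps.
Proof using Hsol.
  intros He. destruct Hsol as [Hc _].
  destruct (Hc 0 (Rle_refl 0) eps He) as [d [Hd Hd']].
  exists d. split; auto. intros t Ht.
  specialize (Hd' t ltac:(lra) ltac:(rewrite Rminus_0_r, Rabs_right; lra)).
  rewrite v_zero, Rminus_0_r in Hd'. apply Rabs_def2 in Hd'. lra.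
Qed.

(* Semiconcavity: by the supersolution property, a parabola touching [v] from
   below has [S q <= c v - f(p) <= c M - inf f], uniformly in the window. *)
Lemma semiconcave : exists k1, 0 <= k1 /\
  forall al be x p q, 0 < al -> al < x < be -> touch_below v al be x p q -> q <= k1.
Proof using HA Hsol HL.
  destruct constants_pos as (HS & Hc & Ha1 & Hl & Hmu).
  destruct v_bounded as [M HM].
  destruct (fH_lower mu lam a Hl ltac:(lra) Hmu) as [m0 Hm0].
  exists (Rmax 0 ((c * M - m0) / S)). split; [apply Rmax_l|].
  intros al be x p q Hal Hx Ht.
  assert (Hp := touch_below_slope_nonneg v al be x p q v_mono ltac:(lra) Hx Ht).
  assert (T := visc_super_parabola mu sigma c a lam v M x al be p q
                 v_super (abs_of_bound M HM) Hal Hx Ht).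
  fold S in T. specialize (Hm0 p Hp). destruct (HM x ltac:(lra)) as [Hv0 HvM].
  eapply Rle_trans; [|apply Rmax_r].
  apply Rmult_le_reg_l with S; [auto|].
  replace (S * ((c * M - m0) / S)) with (c * M - m0) by (field; lra). nra.
Qed.

(* Semiconcavity bounds the left difference quotients of [v] on [a0, b0]:
   compare with the chord of [v] over [a0/2, x]. *)
Lemma left_difference_bound (M k1 a0 b0 x h : R) :
  (forall y, 0 <= y -> 0 <= v y <= M) -> 0 <= k1 ->
  (forall al be x p q, 0 < al -> al < x < be -> touch_below v al be x p q -> q <= k1) ->
  0 < a0 -> a0 <= x <= b0 -> 0 < h < x - a0 / 2 ->
  v x - v (x - h) <= (2 * M / a0 + k1 * b0 / 2) * h.
Proof using Hsol HL.
  intros HM Hk1 Hconc Ha0 Hx Hh.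
  set (a1 := a0 / 2).
  assert (CL := chord_lower v a1 x k1 ltac:(unfold a1; lra)).
  specialize (CL ltac:(intros t Ht; apply v_cont; unfold a1 in Ht; lra)).
  specialize (CL ltac:(intros y p q Hy; apply Hconc; unfold a1 in *; lra) (x - h) ltac:(unfold a1; lra)).
  set (D := v x - v a1) in *.
  assert (HD : 0 <= D <= M).
  { unfold D. assert (v a1 <= v x) by (apply v_mono; unfold a1; lra).
    pose proof (HM x ltac:(lra)). pose proof (HM a1 ltac:(unfold a1; lra)). lra. }
  assert (E : v x - v (x - h) <= D * h / (x - a1) + k1 / 2 * (x - h - a1) * h).
  { assert (v x - (v a1 + D * (x - h - a1) / (x - a1)) = D * h / (x - a1))
      by (unfold D; field; unfold a1; lra).
    replace (x - (x - h)) with h in CL by ring. lra. }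
  assert (D * h / (x - a1) <= 2 * M / a0 * h).
  { assert (Hinv : / (x - a1) <= 2 / a0).
    { replace (2 / a0) with (/ a1) by (unfold a1; field; lra).
      apply Rinv_le_contravar; unfold a1; lra. }
    unfold Rdiv. replace (2 * M * / a0 * h) with (M * (h * (2 / a0))) by (field; lra).
    rewrite Rmult_assoc. apply Rmult_le_compat; try lra.
    - apply Rmult_le_pos; [lra | left; apply Rinv_0_lt_compat; unfold a1; lra].
    - apply Rmult_le_compat_l; lra. }
  assert (k1 / 2 * (x - h - a1) * h <= k1 * b0 / 2 * h).
  { unfold a1. assert (k1 * h * (x - h - a0 / 2) <= k1 * h * b0)
      by (apply Rmult_le_compat_l; [apply Rmult_le_pos|]; lra). lra. }
  lra.
Qed.

(* Semiconvexity on windows away from 0: a parabola touching [v] from above has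
   a bounded slope (previous lemma), so the subsolution property and the linear
   growth of [f] bound its curvature from below. *)
Lemma semiconvex_window (a0 b0 : R) : 0 < a0 -> exists k2, 0 <= k2 /\
  forall al be x p q, a0 <= al -> be <= b0 -> al < x < be -> touch_above v al be x p q -> - k2 <= q.
Proof using HA Hsol HL.
  intros Ha0.
  destruct constants_pos as (HS & Hc & Ha1 & Hl & Hmu).
  destruct v_bounded as [M HM].
  destruct semiconcave as [k1 [Hk1 Hconc]].
  set (P := 2 * M / a0 + k1 * b0 / 2).
  set (A0 := lam * ln a + a).
  exists (Rmax 0 ((mu * P + A0) / S)). split; [apply Rmax_l|].
  intros al be x p q Hal Hbe Hx Ht.
  assert (Hp := touch_above_slope_nonneg v al be x p q v_mono ltac:(lra) Hx Ht).
  assert (HpP : p <= P).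
  { enough (p - P <= 0) by lra.
    apply (le_of_small _ (q / 2) (x - al)); [lra|]. intros h Hh.
    pose proof (Ht (x - h) ltac:(lra)) as T1. replace (x - h - x) with (- h) in T1 by ring.
    pose proof (left_difference_bound M k1 a0 b0 x h HM Hk1 Hconc Ha0 ltac:(lra) ltac:(lra)) as B.
    fold P in B. nra. }
  assert (T := visc_sub_parabola mu sigma c a lam v M x al be p q
                 v_sub (abs_of_bound M HM) ltac:(lra) Hx Ht).
  fold S in T.
  pose proof (fH_upper mu lam a Hl ltac:(lra) Hmu p Hp) as Fu. fold A0 in Fu.
  destruct (HM x ltac:(lra)) as [Hv0 HvM].
  assert (S * q >= - (mu * P + A0)) by nra.
  assert (- ((mu * P + A0) / S) <= q).
  { apply Rmult_le_reg_l with S; [auto|].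
    replace (S * - ((mu * P + A0) / S)) with (- (mu * P + A0)) by (field; lra). lra. }
  pose proof (Rmax_r 0 ((mu * P + A0) / S)). lra.
Qed.

Lemma v_chord_window (a0 b0 : R) : 0 < a0 -> exists k, 0 <= k /\ chord_bound v a0 b0 k.
Proof using HA Hsol HL.
  intros Ha0.
  destruct semiconcave as [k1 [Hk1 Hconc]].
  destruct (semiconvex_window a0 b0 Ha0) as [k2 [Hk2 Hconv]].
  exists (Rmax k1 k2). split; [eapply Rle_trans; [exact Hk1 | apply Rmax_l]|].
  pose proof (Rmax_l k1 k2). pose proof (Rmax_r k1 k2).
  apply chord_bound_of_touching.
  - intros t Ht. apply v_cont. lra.
  - intros al be x p q H1 H2 H3 H4. specialize (Hconc al be x p q ltac:(lra) H3 H4). lra.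
  - intros al be x p q H1 H2 H3 H4. specialize (Hconv al be x p q H1 H2 H3 H4). lra.
Qed.

Lemma v_derive (x : R) : 0 < x -> is_derive v x (Derive v x).
Proof using HA Hsol HL.
  intros Hx. destruct (v_chord_window (x / 2) (x + 1) ltac:(lra)) as [k [Hk W]].
  apply (chord_bound_derive v (x / 2) (x + 1) k Hk W x). lra.
Qed.

Lemma Dv_cont (x : R) : 0 < x -> continuity_pt (Derive v) x.
Proof using HA Hsol HL.
  intros Hx. destruct (v_chord_window (x / 2) (2 * x) ltac:(lra)) as [k [Hk W]].
  apply continuity_pt_of_eps. intros eps He.
  exists (Rmin (x / 2) (eps / (k + 1))). split; [apply Rmin_pos; [lra | apply Rdiv_lt_0_compat; lra]|].
  intros y Hy. pose proof (Rmin_l (x / 2) (eps / (k + 1))). pose proof (Rmin_r (x / 2) (eps / (k + 1))).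
  pose proof (proj1 (Rabs_lt_between' y x _) Hy).
  eapply Rle_lt_trans; [apply (chord_bound_lipschitz v (x / 2) (2 * x) k Hk W); lra|].
  apply Rle_lt_trans with ((k + 1) * Rabs (y - x)); [pose proof (Rabs_pos (y - x)); nra|].
  apply Rmult_lt_reg_r with (/ (k + 1)); [apply Rinv_0_lt_compat; lra|].
  replace ((k + 1) * Rabs (y - x) * / (k + 1)) with (Rabs (y - x)) by (field; lra).
  replace (eps * / (k + 1)) with (eps / (k + 1)) by reflexivity. lra.
Qed.

Lemma Dv_nonneg (x : R) : 0 < x -> 0 <= Derive v x.
Proof using HA Hsol HL.
  intros Hx. apply Rnot_lt_le. intros Hneg.
  assert (Hd : is_derive (fun y => - v y) x (- Derive v x)).
  { apply (is_derive_opp v x (Derive v x)), v_derive. exact Hx. }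
  destruct (below_left_of_pos_derive _ x _ Hd ltac:(lra)) as [del [Hdel H]].
  pose proof (Rmax_l (x / 2) (x - del / 2)). pose proof (Rmax_r (x / 2) (x - del / 2)).
  assert (Rmax (x / 2) (x - del / 2) < x) by (apply Rmax_lub_lt; lra).
  specialize (H (Rmax (x / 2) (x - del / 2)) ltac:(lra)). cbv beta in H.
  assert (v (Rmax (x / 2) (x - del / 2)) <= v x) by (apply v_mono; lra).
  lra.
Qed.

(* The second derivative dictated by (E): [v'' = (c v - f(v')) / S]. *)
Definition vpp (y : R) : R := (c * v y - fH mu lam a (Derive v y)) / S.

Lemma vpp_equation (y : R) : c * v y - fH mu lam a (Derive v y) = S * vpp y.
Proof using HA. destruct constants_pos as (HS & _). unfold vpp. field. lra. Qed.

Lemma vpp_cont (x : R) : 0 < x -> continuity_pt vpp x.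
Proof using HA Hsol HL.
  intros Hx. destruct constants_pos as (HS & Hc & Ha1 & Hl & _).
  unfold vpp. apply continuity_pt_div; [| apply continuity_pt_const; intros ? ?; reflexivity | lra].
  apply continuity_pt_minus; [apply continuity_pt_scal, v_cont; exact Hx|].
  apply (continuity_pt_comp (Derive v) (fH mu lam a)); [apply Dv_cont; exact Hx|].
  apply fH_continuous; lra.
Qed.

(* Near [x], subtracting the parabola with curvature [v''(x)] leaves a function
   satisfying the chord bound with an arbitrarily small constant [e]: touching
   parabolas of the difference have slope [v'] and, by (E) in the viscosity sense
   and the continuity of [vpp], curvature within [e] of [vpp z - vpp x]. *)
Lemma flattened_chord_bound (x e : R) : 0 < x -> 0 < e ->
  exists r0, 0 < r0 <= x / 2 /\ chord_bound (fun y => v y - vpp x * y ^ 2 / 2) (x - r0) (x + r0) e.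
Proof using HA Hsol HL.
  intros Hx He. destruct constants_pos as (HS & _).
  destruct v_bounded as [M HM].
  destruct (eps_of_continuity_pt vpp x (vpp_cont x Hx) e He) as [d0 [Hd0 Hg]].
  set (r0 := Rmin (d0 / 2) (x / 2)).
  assert (R1 : r0 <= d0 / 2) by apply Rmin_l. assert (R2 : r0 <= x / 2) by apply Rmin_r.
  assert (Hr0 : 0 < r0) by (apply Rmin_pos; lra).
  exists r0. split; [lra|].
  assert (Gz : forall z, x - r0 <= z <= x + r0 -> Rabs (vpp z - vpp x) < e).
  { intros z Hz. apply Hg. apply Rabs_lt_between'. lra. }
  apply chord_bound_of_touching.
  - intros t Ht. apply continuity_pt_minus; [apply v_cont; lra | reg].
  - intros al be z p q Hal Hbe Hz Ht. apply touch_below_shift in Ht.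
    assert (Ep : p + vpp x * z = Derive v z) by (apply (touching_slope v al be z (Derive v z) _ (q + vpp x) Hz); [apply v_derive; lra | left; exact Ht]).
    pose proof (visc_super_parabola mu sigma c a lam v M z al be _ _ v_super (abs_of_bound M HM) ltac:(lra) Hz Ht) as T.
    rewrite Ep in T. fold S in T. pose proof (vpp_equation z) as Eq.
    specialize (Gz z ltac:(lra)). apply Rabs_def2 in Gz. nra.
  - intros al be z p q Hal Hbe Hz Ht. apply touch_above_shift in Ht.
    assert (Ep : p + vpp x * z = Derive v z) by (apply (touching_slope v al be z (Derive v z) _ (q + vpp x) Hz); [apply v_derive; lra | right; exact Ht]).
    pose proof (visc_sub_parabola mu sigma c a lam v M z al be _ _ v_sub (abs_of_bound M HM) ltac:(lra) Hz Ht) as T.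
    rewrite Ep in T. fold S in T. pose proof (vpp_equation z) as Eq.
    specialize (Gz z ltac:(lra)). apply Rabs_def2 in Gz. nra.
Qed.

(* [v] is C^2 on (0, oo) and satisfies (E) classically: the derivative of
   [v' - vpp x * y] is [e]-Lipschitz near [x] for every [e > 0]. *)
Lemma v_C2 (x : R) : 0 < x -> is_derive (Derive v) x (vpp x).
Proof using HA Hsol HL.
  intros Hx. apply is_derive_Reals. intros eps Heps.
  destruct (flattened_chord_bound x (eps / 2) Hx ltac:(lra)) as [r0 [Hr0 Hch]].
  set (g := vpp x). set (u := fun y => v y - g * y ^ 2 / 2).
  assert (Du : forall y, x - r0 < y < x + r0 -> Derive u y = Derive v y - g * y).
  { intros y Hy. apply is_derive_unique. unfold u.
    apply (is_derive_minus v (fun y => g * y ^ 2 / 2)); [apply v_derive; lra|].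
    auto_derive; auto; field. }
  exists (mkposreal r0 (proj1 Hr0)). intros h Hh0 Hh. simpl in Hh.
  apply Rabs_def2 in Hh as Hh'.
  pose proof (chord_bound_lipschitz u (x - r0) (x + r0) (eps / 2) ltac:(lra) Hch (x + h) x ltac:(lra) ltac:(lra)) as Lu.
  rewrite !Du in Lu by lra. replace (x + h - x) with h in Lu by ring.
  replace ((Derive v (x + h) - Derive v x) / h - g)
    with ((Derive v (x + h) - g * (x + h) - (Derive v x - g * x)) / h) by (field; auto).
  unfold Rdiv. rewrite Rabs_mult, Rabs_inv.
  assert (Hh2 : 0 < Rabs h) by (apply Rabs_pos_lt; auto).
  apply Rle_lt_trans with (eps / 2 * Rabs h * / Rabs h).
  - apply Rmult_le_compat_r; [left; apply Rinv_0_lt_compat; auto | exact Lu].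
  - replace (eps / 2 * Rabs h * / Rabs h) with (eps / 2) by (field; lra). lra.
Qed.

(* At a first zero [z] of [v''], [v'(z) > 0], so [S v'' = c v - f(v')] has
   derivative [c v'(z) > 0] at [z] (the [f(v')] term is stationary since
   [v''(z) = 0]); hence [v'' < 0] just left of [z], a contradiction. *)
Lemma vpp_pos_persists (x0 : R) : 0 < x0 -> 0 < vpp x0 -> forall t, x0 <= t -> 0 < vpp t.
Proof using HA Hsol HL.
  intros Hx0 Hpos t Ht. apply Rnot_le_lt. intros Hneg.
  destruct constants_pos as (HS & Hc & Ha1 & Hl & _).
  destruct (first_zero vpp x0 t Ht ltac:(intros; apply vpp_cont; lra) Hpos Hneg) as [z [Hz [Gz Gpos]]].
  set (m := (x0 + z) / 2).
  assert (Dm : Derive v x0 < Derive v m).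
  { destruct (mvt_pos (Derive v) vpp x0 m Hx0 ltac:(unfold m; lra) v_C2) as [xi [Hxi E]].
    assert (0 < vpp xi) by (apply Gpos; unfold m in *; lra).
    assert (0 < vpp xi * (m - x0)) by (apply Rmult_lt_0_compat; unfold m; lra). lra. }
  assert (Dz : Derive v m <= Derive v z).
  { apply (derive_nonneg_le _ vpp); [unfold m; lra | unfold m; lra | exact v_C2 |].
    intros s Hs. destruct (Req_dec s z) as [->|]; [lra | left; apply Gpos; unfold m in *; lra]. }
  assert (Dpos : 0 < Derive v z) by (pose proof (Dv_nonneg x0 Hx0); lra).
  destruct (fH_ex_derive mu lam a (Derive v z) Hl ltac:(lra)) as [dF HdF].
  assert (Hder : is_derive (fun t => c * v t - fH mu lam a (Derive v t)) z (c * Derive v z - vpp z * dF)).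
  { apply (is_derive_minus (fun t => c * v t) (fun t => fH mu lam a (Derive v t))).
    - apply is_derive_scal, v_derive. lra.
    - apply (is_derive_comp (fH mu lam a) (Derive v)); [exact HdF | apply v_C2; lra]. }
  rewrite Gz, Rmult_0_l, Rminus_0_r in Hder.
  destruct (below_left_of_pos_derive _ _ _ Hder ltac:(nra)) as [d [Hd Hleft]].
  pose proof (Rmax_l x0 (z - d / 2)). pose proof (Rmax_r x0 (z - d / 2)).
  assert (Rmax x0 (z - d / 2) < z) by (apply Rmax_lub_lt; lra).
  specialize (Hleft (Rmax x0 (z - d / 2)) ltac:(lra)). cbv beta in Hleft.
  rewrite !vpp_equation, Gz in Hleft.
  specialize (Gpos (Rmax x0 (z - d / 2)) ltac:(lra)). nra.
Qed.

(* Concavity, step 2: a persistently positive [v''] would make [v'] grow past a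
   positive level, and [v] would be unbounded. *)
Lemma vpp_nonpos (x : R) : 0 < x -> vpp x <= 0.
Proof using HA Hsol HL.
  intros Hx. apply Rnot_lt_le. intros Hpos.
  pose proof (vpp_pos_persists x Hx Hpos) as Hall.
  destruct v_bounded as [M HM].
  assert (D1 : Derive v x < Derive v (x + 1)).
  { destruct (mvt_pos (Derive v) vpp x (x + 1) Hx ltac:(lra) v_C2) as [xi [Hxi E]].
    specialize (Hall xi ltac:(lra)). lra. }
  pose proof (Dv_nonneg x Hx).
  apply (no_linear_growth v (Derive v) M (x + 1) (Derive v (x + 1)) ltac:(lra) ltac:(lra) v_derive).
  { intros t Ht. apply abs_of_bound; [exact HM | lra]. }
  intros t Ht. apply (derive_nonneg_le _ vpp); [lra | exact Ht | exact v_C2 |].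
  intros s Hs. left. apply Hall. lra.
Qed.

Lemma Dv_noninc (x y : R) : 0 < x -> x <= y -> Derive v y <= Derive v x.
Proof using HA Hsol HL.
  intros Hx Hxy.
  enough (- Derive v x <= - Derive v y) by lra.
  apply (derive_nonneg_le (fun t => - Derive v t) (fun t => - vpp t)); [lra | lra | |].
  - intros t Ht. apply (is_derive_opp (Derive v) t (vpp t)), v_C2. exact Ht.
  - intros t Ht. pose proof (vpp_nonpos t ltac:(lra)). lra.
Qed.

(* Near 0, (E) and [v >= 0] give [S v'' >= - (mu v' + A0)], so
   [exp (mu t / S) (v' + A0 / mu)] is nondecreasing and [v'] stays bounded. *)
Lemma Dv_bounded : exists B, forall x, 0 < x -> Derive v x <= B.
Proof using HA Hsol HL.
  destruct constants_pos as (HS & Hc & Ha1 & Hl & Hmu).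
  destruct v_bounded as [M HM].
  set (A0 := lam * ln a + a).
  assert (HA0 : 0 < A0) by (assert (0 < ln a) by (rewrite <- ln_1; apply ln_increasing; lra); unfold A0; nra).
  set (k := mu / S). assert (Hk : 0 < k) by (apply Rdiv_lt_0_compat; lra).
  set (c0 := A0 / mu). assert (Hc0 : 0 < c0) by (apply Rdiv_lt_0_compat; lra).
  set (e := fun t => exp (k * t) * (Derive v t + c0)).
  assert (Hde : forall t, 0 < t ->
    is_derive e t (k * exp (k * t) * (Derive v t + c0) + exp (k * t) * vpp t)).
  { intros t Ht. unfold e.
    assert (D1 : is_derive (fun t => exp (k * t)) t (k * exp (k * t))) by (auto_derive; auto; ring).
    pose proof (is_derive_plus (Derive v) (fun _ => c0) t _ _ (v_C2 t Ht) (is_derive_const c0 t)) as D2.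
    rewrite plus_zero_r in D2.
    exact (is_derive_mult (fun t => exp (k * t)) (fun t => plus (Derive v t) c0) t _ _ D1 D2
             ltac:(intros; apply Rmult_comm)). }
  assert (Hvpp : forall t, 0 < t -> - k * (Derive v t + c0) <= vpp t).
  { intros t Ht. pose proof (fH_upper mu lam a Hl ltac:(lra) Hmu (Derive v t) (Dv_nonneg t Ht)) as Fu.
    pose proof (vpp_equation t) as Eq. pose proof (HM t ltac:(lra)) as Hv.
    apply Rmult_le_reg_l with S; [lra|].
    replace (S * (- k * (Derive v t + c0))) with (- (mu * Derive v t + A0)) by (unfold k, c0; field; lra).
    fold A0 in Fu. nra. }
  exists (exp k * (Derive v 1 + c0)).
  assert (Hek : 1 <= exp k) by (rewrite <- exp_0; apply exp_le; lra).
  pose proof (Dv_nonneg 1 ltac:(lra)).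
  intros x Hx. destruct (Rle_lt_dec 1 x) as [H1|H1].
  - pose proof (Dv_noninc 1 x ltac:(lra) H1). nra.
  - assert (Hex : e x <= e 1).
    { apply (derive_nonneg_le e _ x 1 Hx ltac:(lra) Hde). intros t Ht.
      pose proof (exp_pos (k * t)). specialize (Hvpp t ltac:(lra)).
      assert (0 <= exp (k * t) * (k * (Derive v t + c0) + vpp t)) by (apply Rmult_le_pos; lra). nra. }
    unfold e in Hex. rewrite Rmult_1_r in Hex.
    assert (1 <= exp (k * x)) by (rewrite <- exp_0; apply exp_le; nra).
    pose proof (Dv_nonneg x Hx). nra.
Qed.

(* Since [v'] is nonincreasing, [v] lies below its tangent lines on (0, oo) ... *)
Lemma tangent_pos (z w : R) : 0 < z -> 0 < w -> v w <= v z + Derive v z * (w - z).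
Proof using HA Hsol HL.
  intros Hz Hw. destruct (Rtotal_order w z) as [H1|[->|H1]]; [| lra |].
  - destruct (mvt_pos v (Derive v) w z Hw H1 v_derive) as [xi [Hxi E]].
    pose proof (Dv_noninc xi z ltac:(lra) (proj2 Hxi)). nra.
  - destruct (mvt_pos v (Derive v) z w Hz H1 v_derive) as [xi [Hxi E]].
    pose proof (Dv_noninc z xi Hz (proj1 Hxi)). nra.
Qed.

Lemma tangent (z w : R) : 0 < z -> 0 <= w -> v w <= v z + Derive v z * (w - z).
Proof using HA Hsol HL.
  intros Hz Hw. destruct (Rlt_le_dec 0 w) as [Hw'|Hw']; [apply tangent_pos; auto|].
  replace w with 0 by lra.
  enough (v 0 - v z - Derive v z * (0 - z) <= 0) by lra.
  apply (le_of_small _ (Derive v z) z Hz). intros h Hh.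
  pose proof (tangent_pos z h Hz ltac:(lra)). pose proof (v_mono 0 h ltac:(lra) ltac:(lra)). lra.
Qed.

Lemma v_concave : concave0 v.
Proof using HA Hsol HL.
  intros x y t Hx Hy Ht.
  set (z := t * x + (1 - t) * y).
  destruct (Rlt_le_dec 0 z) as [Hz|Hz].
  - pose proof (tangent z x Hz Hx). pose proof (tangent z y Hz Hy).
    assert (E : t * (v z + Derive v z * (x - z)) + (1 - t) * (v z + Derive v z * (y - z)) = v z)
      by (unfold z; ring).
    assert (t * v x <= t * (v z + Derive v z * (x - z))) by (apply Rmult_le_compat_l; lra).
    assert ((1 - t) * v y <= (1 - t) * (v z + Derive v z * (y - z))) by (apply Rmult_le_compat_l; lra).
    lra.
  - (* [z = 0] forces every point carrying positive weight to be 0 *)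
    assert (E1 : t * x = 0) by (unfold z in Hz; nra). assert (E2 : (1 - t) * y = 0) by (unfold z in Hz; nra).
    replace z with 0 by (unfold z; lra). rewrite v_zero.
    assert (t * v x = 0).
    { destruct (Rmult_integral _ _ E1) as [-> | ->]; [ring | rewrite v_zero; ring]. }
    assert ((1 - t) * v y = 0).
    { destruct (Rmult_integral _ _ E2) as [-> | ->]; [ring | rewrite v_zero; ring]. }
    lra.
Qed.

(* [v'] decreases to 0: a positive limit would make the bounded [v] grow linearly. *)
Lemma Dv_small_at_infinity (eps : R) : 0 < eps -> exists X, 0 < X /\ forall x, X <= x -> Derive v x < eps.
Proof using HA Hsol HL.
  intros He.
  destruct (classic (exists X, 0 < X /\ Derive v X < eps)) as [[X [HX HX']]|Hn].
  - exists X. split; auto. intros x Hx. pose proof (Dv_noninc X x HX Hx). lra.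
  - exfalso. destruct v_bounded as [M HM].
    apply (no_linear_growth v (Derive v) M 1 eps ltac:(lra) He v_derive).
    + intros t Ht. apply abs_of_bound; [exact HM | lra].
    + intros t Ht. apply Rnot_lt_le. intros Hlt. apply Hn. exists t. split; [lra | exact Hlt].
Qed.

Lemma v_monotone_limit : exists L, (forall y, 0 <= y -> v y <= L) /\
  forall e, 0 < e -> exists X, 0 < X /\ forall y, X <= y -> L - e < v y.
Proof using Hsol HL.
  destruct v_bounded as [M HM].
  destruct (sup_exists (fun x => 0 <= x) v) as [L [HL1 HL2]].
  { exists 0; lra. } { exists M. intros x Hx. apply HM; auto. }
  exists L. split; [exact HL1|].
  intros e He. destruct (HL2 e He) as [x [Hx Hx']]. exists (x + 1). split; [lra|].
  intros y Hy. pose proof (v_mono x y Hx ltac:(lra)). lra.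
Qed.

Lemma f_Dv_at_infinity (e : R) : 0 < e ->
  exists X, 0 < X /\ forall y, X <= y -> Rabs (fH mu lam a (Derive v y) - fH mu lam a 0) < e.
Proof using HA Hsol HL.
  intros He. destruct constants_pos as (_ & _ & Ha1 & Hl & _).
  destruct (eps_of_continuity_pt _ _ (fH_continuous mu lam a 0 Hl ltac:(lra)) e He) as [d [Hd Hd']].
  destruct (Dv_small_at_infinity d Hd) as [X [HX HX']]. exists X. split; auto.
  intros y Hy. apply Hd'. rewrite Rminus_0_r, Rabs_right; [apply HX'; auto | apply Rle_ge, Dv_nonneg; lra].
Qed.

(* Letting [t -> oo] in [S v'' = c v - f(v')]: the limit [L] of [v] satisfies
   [c L = f(0)].  If [c L < f(0)], eventually [v'' <= - eta / S] and [v'] would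
   become negative; if [c L > f(0)], eventually [v'' > 0], against concavity. *)
Lemma limit_balance (L : R) : (forall y, 0 <= y -> v y <= L) ->
  (forall e, 0 < e -> exists X, 0 < X /\ forall y, X <= y -> L - e < v y) ->
  c * L = fH mu lam a 0.
Proof using HA Hsol HL.
  intros HL1 Vlim. destruct constants_pos as (HS & Hc & _).
  destruct (Rtotal_order (c * L) (fH mu lam a 0)) as [Hlt|[Heq|Hgt]]; auto; exfalso.
  - set (eta := (fH mu lam a 0 - c * L) / 2). assert (Heta : 0 < eta) by (unfold eta; lra).
    destruct (f_Dv_at_infinity eta Heta) as [X [HX HX']].
    destruct Dv_bounded as [B HB].
    apply (no_linear_growth (fun t => - Derive v t) (fun t => - vpp t) B X (eta / S) HX
             ltac:(apply Rdiv_lt_0_compat; lra)).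
    + intros t Ht. apply (is_derive_opp (Derive v) t (vpp t)), v_C2. exact Ht.
    + intros t Ht. rewrite Rabs_Ropp. pose proof (Dv_nonneg t ltac:(lra)).
      pose proof (HB t ltac:(lra)). rewrite Rabs_right; lra.
    + intros t Ht. specialize (HX' t Ht). apply Rabs_def2 in HX'.
      assert (c * v t <= c * L) by (apply Rmult_le_compat_l; [lra | apply HL1; lra]).
      pose proof (vpp_equation t).
      apply Rmult_le_reg_l with S; [lra|].
      replace (S * (eta / S)) with eta by (field; lra). unfold eta in *. lra.
  - set (eta := (c * L - fH mu lam a 0) / 2). assert (Heta : 0 < eta) by (unfold eta; lra).
    destruct (f_Dv_at_infinity eta Heta) as [X1 [HX1 HX1']].
    destruct (Vlim (eta / (2 * c)) ltac:(apply Rdiv_lt_0_compat; lra)) as [X2 [HX2 HX2']].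
    specialize (HX1' (X1 + X2) ltac:(lra)). specialize (HX2' (X1 + X2) ltac:(lra)).
    apply Rabs_def2 in HX1'.
    assert (c * (L - eta / (2 * c)) < c * v (X1 + X2)) by (apply Rmult_lt_compat_l; lra).
    replace (c * (L - eta / (2 * c))) with (c * L - eta / 2) in H by (field; lra).
    pose proof (vpp_nonpos (X1 + X2) ltac:(lra)). pose proof (vpp_equation (X1 + X2)).
    assert (S * vpp (X1 + X2) <= 0) by nra.
    unfold eta in *. lra.
Qed.

Lemma v_limit : is_lim v p_infty (fH mu lam a 0 / c).
Proof using HA Hsol HL.
  destruct constants_pos as (_ & Hc & _).
  destruct v_monotone_limit as [L [HL1 Vlim]].
  pose proof (limit_balance L HL1 Vlim) as EL.
  apply is_lim_spec. intros eps. destruct (Vlim eps (cond_pos eps)) as [X [HX HX']].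
  exists X. intros x Hx. replace (fH mu lam a 0 / c) with L by (rewrite <- EL; field; lra).
  specialize (HX' x ltac:(lra)). pose proof (HL1 x ltac:(lra)). apply Rabs_def1; lra.
Qed.

Lemma Dv_values_bound : bound (fun y => exists x, 0 < x /\ y = Derive v x).
Proof using HA Hsol HL.
  destruct Dv_bounded as [B HB]. exists B. intros y [x [Hx ->]]. auto.
Qed.

Lemma Dv_values_inhabited : exists y, exists x, 0 < x /\ y = Derive v x.
Proof. exists (Derive v 1), 1. split; [lra | reflexivity]. Qed.

(* The right derivative [v'(0+)]: the supremum of the nonincreasing [v'] on (0, oo). *)
Definition Dv0 : R :=
  proj1_sig (completeness (fun y => exists x, 0 < x /\ y = Derive v x) Dv_values_bound Dv_values_inhabited).

Lemma Dv0_lub : is_lub (fun y => exists x, 0 < x /\ y = Derive v x) Dv0.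
Proof. unfold Dv0. apply proj2_sig. Qed.

Lemma Dv_le_Dv0 (x : R) : 0 < x -> Derive v x <= Dv0.
Proof. intros Hx. apply Dv0_lub. eauto. Qed.

Lemma Dv_to_Dv0 (e : R) : 0 < e -> exists rho, 0 < rho /\ forall t, 0 < t < rho -> Rabs (Derive v t - Dv0) < e.
Proof using HA Hsol HL.
  intros He.
  destruct (classic (exists x, 0 < x /\ Dv0 - e < Derive v x)) as [[x [Hx Hlt]]|Hn].
  - exists x. split; [exact Hx|]. intros t Ht.
    pose proof (Dv_noninc t x (proj1 Ht) ltac:(lra)). pose proof (Dv_le_Dv0 t (proj1 Ht)).
    apply Rabs_def1; lra.
  - exfalso. enough (Dv0 <= Dv0 - e) by lra. apply Dv0_lub.
    intros y [x [Hx ->]]. apply Rnot_lt_le. intros Hlt. apply Hn. eauto.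
Qed.

(* [v'(0+) > 0]: otherwise [v' = 0] and [v'' = 0] on (0, oo), and (E) would force
   [v = f(0) / c > 0] there, against [v(0+) = 0]. *)
Lemma Dv0_pos : 0 < Dv0.
Proof using HA Hsol HL.
  destruct constants_pos as (HS & Hc & Ha1 & Hl & _).
  apply Rnot_le_lt. intros Hn.
  assert (Z : forall x, 0 < x -> Derive v x = 0)
    by (intros x Hx; pose proof (Dv_le_Dv0 x Hx); pose proof (Dv_nonneg x Hx); lra).
  assert (HF0 : 0 < fH mu lam a 0 / c) by (apply Rdiv_lt_0_compat; [apply fH_0_pos|]; lra).
  destruct (v_small_near0 _ HF0) as [r [Hr Hsmall]].
  assert (Hvpp : vpp (r / 2) = 0).
  { assert (H0 : is_derive (Derive v) (r / 2) 0).
    { apply (is_derive_ext_loc (fun _ => 0)); [|auto_derive; reflexivity].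
      apply (locally_of_ball (r / 2) (r / 2) _ ltac:(lra)).
      intros y Hy. apply Rabs_def2 in Hy. symmetry. apply Z. lra. }
    rewrite <- (is_derive_unique _ _ _ H0). symmetry. apply is_derive_unique, v_C2. lra. }
  pose proof (vpp_equation (r / 2)) as E. rewrite Z, Hvpp in E by lra.
  specialize (Hsmall (r / 2) ltac:(lra)).
  assert (c * v (r / 2) < c * (fH mu lam a 0 / c)) by (apply Rmult_lt_compat_l; lra).
  replace (c * (fH mu lam a 0 / c)) with (fH mu lam a 0) in H by (field; lra). lra.
Qed.

(* The first and second derivatives of [v] on [0, oo), with their one-sided values at 0. *)
Definition v1 (x : R) : R := if Rlt_dec 0 x then Derive v x else Dv0.
Definition v2 (x : R) : R := (c * v x - fH mu lam a (v1 x)) / S.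

Lemma v1_pos (x : R) : 0 < x -> v1 x = Derive v x.
Proof. intros Hx. unfold v1. destruct (Rlt_dec 0 x); [reflexivity | contradiction]. Qed.

Lemma v1_zero : v1 0 = Dv0.
Proof. unfold v1. destruct (Rlt_dec 0 0); [lra | reflexivity]. Qed.

Lemma v1_range (x : R) : 0 <= x -> 0 <= v1 x <= Dv0.
Proof using HA Hsol HL.
  intros Hx. destruct (Rlt_le_dec 0 x) as [Hx'|Hx'].
  - rewrite v1_pos by exact Hx'. split; [apply Dv_nonneg | apply Dv_le_Dv0]; exact Hx'.
  - replace x with 0 by lra. rewrite v1_zero. pose proof Dv0_pos. lra.
Qed.

Lemma v1_derive (x : R) : 0 < x -> is_derive v x (v1 x).
Proof using HA Hsol HL. intros Hx. rewrite v1_pos by exact Hx. apply v_derive. exact Hx. Qed.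

Lemma v2_pos (x : R) : 0 < x -> v2 x = vpp x.
Proof. intros Hx. unfold v2, vpp. rewrite v1_pos by exact Hx. reflexivity. Qed.

Lemma v2_derive (x : R) : 0 < x -> is_derive v1 x (v2 x).
Proof using HA Hsol HL.
  intros Hx. rewrite v2_pos by exact Hx.
  apply (is_derive_ext_loc (Derive v)); [|apply v_C2; exact Hx].
  apply (locally_of_ball x x _ Hx). intros y Hy. apply Rabs_def2 in Hy.
  symmetry. apply v1_pos. lra.
Qed.

(* [v2] is right-continuous at 0, since [v -> 0] and [v' -> v'(0+)]. *)
Lemma v2_right_cont0 (e : R) : 0 < e -> exists rho, 0 < rho /\ forall t, 0 < t < rho -> Rabs (v2 t - v2 0) < e.
Proof using HA Hsol HL.
  intros He. destruct constants_pos as (HS & Hc & Ha1 & Hl & _).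
  destruct (eps_of_continuity_pt _ _ (fH_continuous mu lam a Dv0 Hl ltac:(lra)) (e * S / 2) ltac:(nra))
    as [d [Hd HF]].
  destruct (Dv_to_Dv0 d Hd) as [r1 [Hr1 Hr1']].
  destruct (v_small_near0 (e * S / (2 * c)) ltac:(apply Rdiv_lt_0_compat; nra)) as [r2 [Hr2 Hr2']].
  exists (Rmin r1 r2). split; [apply Rmin_pos; auto|]. intros t Ht.
  pose proof (Rmin_l r1 r2). pose proof (Rmin_r r1 r2).
  specialize (HF (Derive v t) (Hr1' t ltac:(lra))). specialize (Hr2' t ltac:(lra)).
  pose proof (v_mono 0 t ltac:(lra) ltac:(lra)) as Hvt. rewrite v_zero in Hvt.
  unfold v2. rewrite v1_pos, v1_zero, v_zero by lra.
  replace ((c * v t - fH mu lam a (Derive v t)) / S - (c * 0 - fH mu lam a Dv0) / S)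
    with ((c * v t - (fH mu lam a (Derive v t) - fH mu lam a Dv0)) / S) by (field; lra).
  apply abs_div_lt; [lra|].
  assert (c * v t < e * S / 2).
  { replace (e * S / 2) with (c * (e * S / (2 * c))) by (field; lra). apply Rmult_lt_compat_l; lra. }
  eapply Rle_lt_trans; [apply Rabs_triang|]. rewrite Rabs_Ropp, Rabs_right by nra. lra.
Qed.

Lemma v_right_deriv : right_deriv0 v (v1 0).
Proof using HA Hsol HL.
  rewrite v1_zero. apply (right_deriv_of_derive_limit v (Derive v) Dv0 v_derive).
  - intros e He. destruct (v_small_near0 e He) as [r [Hr Hr']]. exists r. split; [exact Hr|].
    intros t Ht. rewrite v_zero, Rminus_0_r. pose proof (v_mono 0 t ltac:(lra) ltac:(lra)).
    rewrite v_zero in H. rewrite Rabs_right by lra. apply Hr'. lra.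
  - exact Dv_to_Dv0.
Qed.

Lemma v1_right_deriv : right_deriv0 v1 (v2 0).
Proof using HA Hsol HL.
  apply (right_deriv_of_derive_limit v1 v2 (v2 0) v2_derive); [|exact v2_right_cont0].
  intros e He. destruct (Dv_to_Dv0 e He) as [r [Hr Hr']]. exists r. split; [exact Hr|].
  intros t Ht. rewrite v1_pos, v1_zero by lra. auto.
Qed.

Lemma v2_cont0 : cont0 v2.
Proof using HA Hsol HL.
  intros x Hx e He. destruct (Rlt_le_dec 0 x) as [Hx'|Hx'].
  - destruct (eps_of_continuity_pt vpp x (vpp_cont x Hx') e He) as [d [Hd Hd']].
    exists (Rmin d (x / 2)). split; [apply Rmin_pos; lra|]. intros y Hy Hyx.
    pose proof (Rmin_l d (x / 2)). pose proof (Rmin_r d (x / 2)). apply Rabs_def2 in Hyx as Hyx'.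
    rewrite !v2_pos by lra. apply Hd'. lra.
  - replace x with 0 in * by lra. destruct (v2_right_cont0 e He) as [r [Hr Hr']].
    exists r. split; [exact Hr|]. intros y Hy Hyx.
    destruct (Rlt_le_dec 0 y) as [Hy'|Hy'].
    + apply Hr'. rewrite Rminus_0_r, Rabs_right in Hyx by lra. lra.
    + replace y with 0 by lra. rewrite Rminus_diag, Rabs_R0. lra.
Qed.

Lemma v_bounded0 : bounded0 v.
Proof using Hsol HL. destruct v_bounded as [M HM]. exists M. apply abs_of_bound. exact HM. Qed.

Lemma v1_bounded0 : bounded0 v1.
Proof using HA Hsol HL.
  exists Dv0. intros x Hx. destruct (v1_range x Hx). rewrite Rabs_right; lra.
Qed.

(* [v2] is bounded, since [v] and [v1] are and [f] has linear bounds on [0, oo). *)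
Lemma v2_bounded0 : bounded0 v2.
Proof using HA Hsol HL.
  destruct constants_pos as (HS & Hc & Ha1 & Hl & Hmu).
  destruct v_bounded as [M HM].
  destruct (fH_lower mu lam a Hl ltac:(lra) Hmu) as [m0 Hm0].
  set (A0 := lam * ln a + a).
  exists ((Rabs (mu * Dv0 + A0) + Rabs (c * M - m0)) / S).
  intros x Hx. destruct (v1_range x Hx) as [Va Vb]. destruct (HM x Hx) as [Hv0 HvM].
  pose proof (Hm0 (v1 x) Va). pose proof (fH_upper mu lam a Hl ltac:(lra) Hmu (v1 x) Va). fold A0 in H0.
  unfold v2. unfold Rdiv. rewrite Rabs_mult, Rabs_inv, (Rabs_right S) by lra.
  apply Rmult_le_compat_r; [left; apply Rinv_0_lt_compat; lra|].
  pose proof (Rle_abs (mu * Dv0 + A0)). pose proof (Rle_abs (c * M - m0)).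
  pose proof (Rabs_pos (mu * Dv0 + A0)). pose proof (Rabs_pos (c * M - m0)).
  assert (c * v x <= c * M) by (apply Rmult_le_compat_l; lra).
  assert (0 <= c * v x) by nra.
  assert (mu * v1 x <= mu * Dv0) by (apply Rmult_le_compat_l; lra).
  apply Rabs_le. lra.
Qed.

Lemma v1_limit : is_lim v1 p_infty 0.
Proof using HA Hsol HL.
  apply is_lim_spec. intros eps. destruct (Dv_small_at_infinity eps (cond_pos eps)) as [X [HX HX']].
  exists X. intros x Hx. rewrite v1_pos, Rminus_0_r by lra.
  rewrite Rabs_right by (apply Rle_ge, Dv_nonneg; lra). apply HX'. lra.
Qed.

End ViscositySolution.

Theorem mainTheorem7 (mu sigma c a lam : R) (v : R -> R) :
  assumptionA mu sigma c a lam ->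
  visc_sol mu sigma c a lam v -> classL v ->
  exists v1 v2 : R -> R,
    (* v'(0+) exists and is positive *)
    right_deriv0 v (v1 0) /\ 0 < v1 0 /\
    (* v in C^2_b([0,oo)) *)
    (forall x, 0 < x -> is_derive v x (v1 x)) /\
    (forall x, 0 < x -> is_derive v1 x (v2 x)) /\
    right_deriv0 v1 (v2 0) /\
    cont0 v2 /\
    bounded0 v /\ bounded0 v1 /\ bounded0 v2 /\
    (* concavity *)
    concave0 v /\
    (* limits at infinity *)
    is_lim v p_infty (fH mu lam a 0 / c) /\
    is_lim v1 p_infty 0.
Proof.
  intros HA Hsol HL.
  exists (v1 HA Hsol HL), (v2 HA Hsol HL).
  repeat match goal with |- _ /\ _ => split end.
  - exact (v_right_deriv HA Hsol HL).
  - rewrite v1_zero. exact (Dv0_pos HA Hsol HL).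
  - exact (v1_derive HA Hsol HL).
  - exact (v2_derive HA Hsol HL).
  - exact (v1_right_deriv HA Hsol HL).
  - exact (v2_cont0 HA Hsol HL).
  - exact (v_bounded0 Hsol HL).
  - exact (v1_bounded0 HA Hsol HL).
  - exact (v2_bounded0 HA Hsol HL).
  - exact (v_concave HA Hsol HL).
  - exact (v_limit HA Hsol HL).
  - exact (v1_limit HA Hsol HL).
Qed.
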